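(* Let $\theta\in(0,2\pi)$. Then for all $x,y\in S_\theta$: (1) if $\theta\in(0,\pi)$, then $s_{S_\theta}(x,y)\le {\rm th}(\rho_{S_\theta}(x,y)/2)\le (\pi/\theta)\sin(\theta/2)\, s_{S_\theta}(x,y)$; (2) if $\theta=\pi$, then $s_{S_\theta}(x,y)={\rm th}(\rho_{S_\theta}(x,y)/2)$; (3) if $\theta\in(\pi,2\pi)$, then $(\pi/\theta)\,s_{S_\theta}(x,y)\le {\rm th}(\rho_{S_\theta}(x,y)/2)\le s_{S_\theta}(x,y)$. Furthermore, these bounds are sharp.
   Context: $S_\theta=\{x\in\mathbb{C}:0<\arg(x)<\theta\}$. For a domain $G\subsetneq\mathbb{C}$, $s_G(x,y)=\frac{|x-y|}{\inf_{z\in\partial G}(|x-z|+|z-y|)}$. The hyperbolic metric of the upper half-plane $\mathbb{H}^2=\{z:{\rm Im}\,z>0\}$ is given by ${\rm th}(\rho_{\mathbb{H}^2}(u,v)/2)=|u-v|/|u-\overline{v}|$, and the hyperbolic metric of the sector is $\rho_{S_\theta}(x,y)=\rho_{\mathbb{H}^2}(x^{\pi/\theta},y^{\pi/\theta})$ (principal branch of the power, which maps $S_\theta$ conformally onto $\mathbb{H}^2$). *)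

From Stdlib Require Import Reals.
From Coquelicot Require Import Coquelicot.
Open Scope R_scope.

(* Argument of a nonzero complex number, taken in [0, 2*PI). *)
Definition carg (z : C) : R :=
  if Rle_dec 0 (Im z) then acos (Re z / Cmod z)
  else 2 * PI - acos (Re z / Cmod z).

Definition sector (theta : R) (z : C) : Prop :=
  z <> 0%C /\ 0 < carg z < theta.

(* Power z^a along the branch of arg with values in [0, 2*PI);
   for z in S_theta (theta < 2 PI) this is the branch mapping S_theta onto H^2
   when a = PI/theta. *)
Definition cpow (a : R) (z : C) : C :=
  (Rpower (Cmod z) a * cos (a * carg z), Rpower (Cmod z) a * sin (a * carg z)).

Definition is_boundary (G : C -> Prop) (z : C) : Prop :=
  forall eps : posreal,
    (exists w, G w /\ Cmod (w - z) < eps) /\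
    (exists w, ~ G w /\ Cmod (w - z) < eps).

Definition s_metric (G : C -> Prop) (x y : C) : R :=
  Cmod (x - y) /
  real (Glb_Rbar (fun r => exists z, is_boundary G z /\ r = Cmod (x - z) + Cmod (z - y))).

(* Hyperbolic metric of the upper half-plane:
   th(rho/2) = |u - v| / |u - conj v|, i.e. rho = 2 artanh(q) = ln((1+q)/(1-q)). *)
Definition rho_H (u v : C) : R :=
  let q := Cmod (u - v) / Cmod (u - Cconj v) in ln ((1 + q) / (1 - q)).

Definition rho_S (theta : R) (x y : C) : R :=
  rho_H (cpow (PI / theta) x) (cpow (PI / theta) y).

(* Write x = r e^(ia), y = s e^(ib), k = PI / theta and X = (ln r - ln s) / 2.
   Then |x - y|^2, |x - conj y|^2 and (r + s)^2 equal 4 r s (sinh^2 X + q) with q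
   respectively sin^2 ((a - b) / 2), sin^2 ((a + b) / 2) and 1, while the power map
   z |-> z^k turns th^2 (rho / 2) into the ratio of sinh^2 (k X) + sin^2 (k (a - b) / 2)
   and sinh^2 (k X) + sin^2 (k (a + b) / 2).
   The reflection in the bisector preserves everything, so only boundary points on the
   positive real axis matter; there |x - z| + |z - y| is at least |x - conj y|, |x - y|
   or r + s, with equality where a suitable segment meets the axis. Each bound thus
   becomes a polynomial inequality between these squares, which follows from comparing
   sin (k u) with k sin u and sinh (k X) with k sinh X, and from the monotonicity of
   sin u / sin (k u) and of u^2 / sinh^2 u + u^2 / 3.
   The constants are approached by pairs on the bisector, e^(2Y) e^(i theta / 2) and
   e^(i theta / 2), for which th (rho / 2) = tanh (k Y), while s is at least tanh Y and,
   for theta < PI, at most |x - y| / |x - conj y|; let Y tend to 0 or to infinity. *)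

From Stdlib Require Import Reals Lra Lia Psatz.
From Coquelicot Require Import Coquelicot.
Open Scope R_scope.

(** * Elementary inequalities for sin and sinh *)

Lemma le_of_derive_nonneg (f df : R -> R) (a b : R) : a <= b ->
  (forall x, a <= x <= b -> is_derive f x (df x)) ->
  (forall x, a <= x <= b -> 0 <= df x) -> f a <= f b.
Proof.
  intros Hab Hd Hp.
  destruct (MVT_gen f a b df) as [c [Hc Heq]].
  - intros x Hx. apply Hd. rewrite Rmin_left, Rmax_right in Hx by lra. lra.
  - intros x Hx. rewrite Rmin_left, Rmax_right in Hx by lra.
    apply derivable_continuous_pt. exists (df x). apply is_derive_Reals, Hd; lra.
  - rewrite Rmin_left, Rmax_right in Hc by lra.
    assert (0 <= df c * (b - a)) by (apply Rmult_le_pos; [apply Hp; lra | lra]). lra.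
Qed.

Lemma ge0_of_derive_nonneg (f df : R -> R) (u : R) : 0 <= u -> f 0 = 0 ->
  (forall x, 0 <= x <= u -> is_derive f x (df x)) ->
  (forall x, 0 <= x <= u -> 0 <= df x) -> 0 <= f u.
Proof. intros Hu H0 Hd Hp. rewrite <- H0. exact (le_of_derive_nonneg f df 0 u Hu Hd Hp). Qed.

Lemma le_of_sqr_le u v : 0 <= u -> 0 <= v -> u ^ 2 <= v ^ 2 -> u <= v.
Proof. intros. nra. Qed.

Lemma lt_of_sqr_lt u v : 0 <= u -> 0 <= v -> u ^ 2 < v ^ 2 -> u < v.
Proof. intros. nra. Qed.

Lemma sin_sqr_add_cos_sqr x : sin x ^ 2 + cos x ^ 2 = 1.
Proof. pose proof (sin2_cos2 x) as H. unfold Rsqr in H. nra. Qed.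

Lemma sin_sqr_le1 x : sin x ^ 2 <= 1.
Proof. pose proof (sin_sqr_add_cos_sqr x). pose proof (pow2_ge_0 (cos x)). lra. Qed.

Lemma sin_sqr_sub_sin_sqr x y : sin x ^ 2 - sin y ^ 2 = sin (x + y) * sin (x - y).
Proof.
  rewrite sin_plus, sin_minus.
  pose proof (sin_sqr_add_cos_sqr x) as Hx. pose proof (sin_sqr_add_cos_sqr y) as Hy.
  transitivity (sin x ^ 2 * (sin y ^ 2 + cos y ^ 2) - sin y ^ 2 * (sin x ^ 2 + cos x ^ 2));
    [rewrite Hx, Hy; ring | ring].
Qed.

Lemma sin_abs_sqr x : sin (Rabs x) ^ 2 = sin x ^ 2.
Proof. unfold Rabs. destruct (Rcase_abs x); [rewrite sin_neg; ring | reflexivity]. Qed.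

Lemma mul_sin_le_sin_mul k u : 0 <= k <= 1 -> 0 <= u <= PI -> k * sin u <= sin (k * u).
Proof.
  intros Hk Hu. enough (0 <= sin (k * u) - k * sin u) by lra.
  apply (ge0_of_derive_nonneg (fun u => sin (k * u) - k * sin u)
           (fun u => k * cos (k * u) - k * cos u)); [lra | | |].
  - cbv beta. rewrite Rmult_0_r, sin_0. ring.
  - intros x _. auto_derive; [trivial | ring].
  - intros x Hx. assert (cos x <= cos (k * x)) by (apply cos_decr_1; nra). nra.
Qed.

Lemma sin_mul_le_mul_sin k u : 1 <= k -> 0 <= u -> k * u <= PI -> sin (k * u) <= k * sin u.
Proof.
  intros Hk Hu Hku. enough (0 <= k * sin u - sin (k * u)) by lra.
  apply (ge0_of_derive_nonneg (fun u => k * sin u - sin (k * u))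
           (fun u => k * cos u - k * cos (k * u))); [lra | | |].
  - cbv beta. rewrite Rmult_0_r, sin_0. ring.
  - intros x _. auto_derive; [trivial | ring].
  - intros x Hx. assert (cos (k * x) <= cos x) by (apply cos_decr_1; nra). nra.
Qed.

(* The numerator of the derivative of [sin w / sin (k w)]. *)
Lemma sin_ratio_numerator_ge0 k w : 1 <= k -> 0 <= w -> k * w <= PI ->
  0 <= cos w * sin (k * w) - k * sin w * cos (k * w).
Proof.
  intros Hk Hw Hkw.
  apply (ge0_of_derive_nonneg (fun w => cos w * sin (k * w) - k * sin w * cos (k * w))
           (fun w => (k * k - 1) * sin w * sin (k * w))); [lra | | |].
  - cbv beta. rewrite Rmult_0_r, sin_0. ring.
  - intros x _. auto_derive; [trivial | ring].
  - intros x Hx. assert (0 <= sin x) by (apply sin_ge_0; nra).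
    assert (0 <= sin (k * x)) by (apply sin_ge_0; nra).
    apply Rmult_le_pos; [apply Rmult_le_pos |]; nra.
Qed.

Lemma sin_ratio_numerator_le0 k w : 0 <= k <= 1 -> 0 <= w <= PI ->
  cos w * sin (k * w) - k * sin w * cos (k * w) <= 0.
Proof.
  intros Hk Hw.
  enough (0 <= - (cos w * sin (k * w) - k * sin w * cos (k * w))) by lra.
  apply (ge0_of_derive_nonneg (fun w => - (cos w * sin (k * w) - k * sin w * cos (k * w)))
           (fun w => (1 - k * k) * sin w * sin (k * w))); [lra | | |].
  - cbv beta. rewrite Rmult_0_r, sin_0. ring.
  - intros x _. auto_derive; [trivial | ring].
  - intros x Hx. assert (0 <= sin x) by (apply sin_ge_0; nra).
    assert (0 <= sin (k * x)) by (apply sin_ge_0; nra).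
    apply Rmult_le_pos; [apply Rmult_le_pos |]; nra.
Qed.

Lemma cross_mul_le_of_div_le a b c d : 0 < b -> 0 < d -> a / b <= c / d -> a * d <= c * b.
Proof.
  intros Hb Hd H. apply Rmult_le_compat_r with (r := b * d) in H; [| nra].
  replace (a / b * (b * d)) with (a * d) in H by (field; lra).
  replace (c / d * (b * d)) with (c * b) in H by (field; lra). exact H.
Qed.

Lemma sin_div_sin_mul_incr k u v : 1 <= k -> 0 < u <= v -> k * v <= PI ->
  sin u * sin (k * v) <= sin v * sin (k * u).
Proof.
  intros Hk Huv Hkv.
  destruct (Req_dec (k * v) PI) as [E | E].
  { rewrite E, sin_PI. assert (0 <= sin v) by (apply sin_ge_0; nra).
    assert (0 <= sin (k * u)) by (apply sin_ge_0; nra). nra. }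
  assert (Hs : forall w, u <= w <= v -> 0 < sin (k * w)) by (intros w Hw; apply sin_gt_0; nra).
  apply cross_mul_le_of_div_le; [apply Hs; lra | apply Hs; lra |].
  apply (le_of_derive_nonneg (fun w => sin w / sin (k * w))
     (fun w => (cos w * sin (k * w) - k * sin w * cos (k * w)) / sin (k * w) ^ 2)); [lra | |].
  - intros x Hx. specialize (Hs x Hx). auto_derive; [lra | field; lra].
  - intros x Hx. specialize (Hs x Hx).
    apply Rdiv_le_0_compat; [apply sin_ratio_numerator_ge0 | ]; nra.
Qed.

Lemma sin_div_sin_mul_decr k u v : 0 < k <= 1 -> 0 < u <= v -> v < PI ->
  sin v * sin (k * u) <= sin u * sin (k * v).
Proof.
  intros Hk Huv Hv.
  assert (Hs : forall w, u <= w <= v -> 0 < sin (k * w)) by (intros w Hw; apply sin_gt_0; nra).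
  apply cross_mul_le_of_div_le; [apply Hs; lra | apply Hs; lra |].
  enough (- (sin u / sin (k * u)) <= - (sin v / sin (k * v))) by lra.
  apply (le_of_derive_nonneg (fun w => - (sin w / sin (k * w)))
     (fun w => (k * sin w * cos (k * w) - cos w * sin (k * w)) / sin (k * w) ^ 2)); [lra | |].
  - intros x Hx. specialize (Hs x Hx). auto_derive; [lra | field; lra].
  - intros x Hx. specialize (Hs x Hx).
    pose proof (sin_ratio_numerator_le0 k x ltac:(lra) ltac:(lra)).
    apply Rdiv_le_0_compat; nra.
Qed.

Lemma cosh_sqr_sub_sinh_sqr x : cosh x * cosh x - sinh x * sinh x = 1.
Proof.
  assert (E : exp x * exp (- x) = 1) by (rewrite <- exp_plus, Rplus_opp_r; apply exp_0).
  unfold cosh, sinh. nra.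
Qed.

Lemma sinh_pos x : 0 < x -> 0 < sinh x.
Proof. intros. rewrite <- sinh_0. apply sinh_lt; lra. Qed.

Lemma sinh_ge0 x : 0 <= x -> 0 <= sinh x.
Proof. intros [H | <-]; [apply Rlt_le, sinh_pos, H | rewrite sinh_0; lra]. Qed.

Lemma sinh_opp x : sinh (- x) = - sinh x.
Proof. unfold sinh. rewrite Ropp_involutive. field. Qed.

Lemma sinh_abs_sqr x : sinh (Rabs x) ^ 2 = sinh x ^ 2.
Proof. unfold Rabs. destruct (Rcase_abs x); [rewrite sinh_opp; ring | reflexivity]. Qed.

Lemma mul_Rabs k x : 0 <= k -> k * Rabs x = Rabs (k * x).
Proof. intros Hk. rewrite Rabs_mult, (Rabs_pos_eq k Hk). reflexivity. Qed.

Lemma cosh_pos x : 0 < cosh x.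
Proof. unfold cosh. pose proof (exp_pos x). pose proof (exp_pos (- x)). lra. Qed.

Lemma cosh_le a b : 0 <= a <= b -> cosh a <= cosh b.
Proof.
  intros H. apply (le_of_derive_nonneg cosh sinh a b); [lra | |].
  - intros x _. unfold sinh, cosh. auto_derive; [trivial | field].
  - intros x Hx. apply sinh_ge0; lra.
Qed.

Lemma mul_sinh_le_sinh_mul k X : 1 <= k -> 0 <= X -> k * sinh X <= sinh (k * X).
Proof.
  intros Hk HX. enough (0 <= sinh (k * X) - k * sinh X) by lra.
  apply (ge0_of_derive_nonneg (fun X => sinh (k * X) - k * sinh X)
           (fun X => k * cosh (k * X) - k * cosh X)); [lra | | |].
  - cbv beta. rewrite Rmult_0_r, sinh_0. ring.
  - intros x _. unfold sinh, cosh. auto_derive; [trivial | field].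
  - intros x Hx. assert (cosh x <= cosh (k * x)) by (apply cosh_le; nra). nra.
Qed.

Lemma sinh_mul_le_mul_sinh k X : 0 <= k <= 1 -> 0 <= X -> sinh (k * X) <= k * sinh X.
Proof.
  intros Hk HX. enough (0 <= k * sinh X - sinh (k * X)) by lra.
  apply (ge0_of_derive_nonneg (fun X => k * sinh X - sinh (k * X))
           (fun X => k * cosh X - k * cosh (k * X))); [lra | | |].
  - cbv beta. rewrite Rmult_0_r, sinh_0. ring.
  - intros x _. unfold sinh, cosh. auto_derive; [trivial | field].
  - intros x Hx. assert (cosh (k * x) <= cosh x) by (apply cosh_le; nra). nra.
Qed.

Lemma mul_sinh_cosh_le k X : 0 <= k <= 1 -> 0 <= X ->
  k * sinh X * cosh (k * X) <= sinh (k * X) * cosh X.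
Proof.
  intros Hk HX. enough (0 <= sinh (k * X) * cosh X - k * sinh X * cosh (k * X)) by lra.
  apply (ge0_of_derive_nonneg (fun X => sinh (k * X) * cosh X - k * sinh X * cosh (k * X))
           (fun X => (1 - k * k) * sinh X * sinh (k * X))); [lra | | |].
  - cbv beta. rewrite Rmult_0_r, sinh_0. ring.
  - intros x _. unfold sinh, cosh. auto_derive; [trivial | field].
  - intros x Hx. assert (0 <= sinh x) by (apply sinh_ge0; lra).
    assert (0 <= sinh (k * x)) by (apply sinh_ge0; nra).
    apply Rmult_le_pos; [apply Rmult_le_pos |]; nra.
Qed.

Lemma le_sinh_mul_cosh u : 0 <= u -> u <= sinh u * cosh u.
Proof.
  intros Hu. enough (0 <= sinh u * cosh u - u) by lra.
  apply (ge0_of_derive_nonneg (fun u => sinh u * cosh u - u) (fun u => 2 * sinh u * sinh u));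
    [lra | | |].
  - cbv beta. rewrite sinh_0, cosh_0. ring.
  - intros x _. pose proof (cosh_sqr_sub_sinh_sqr x) as E. unfold sinh, cosh in *.
    auto_derive; [trivial | nra].
  - intros x _. nra.
Qed.

Lemma sinh_cube_bound u : 0 <= u -> u * cosh u <= sinh u + sinh u ^ 3 / 3.
Proof.
  intros Hu. enough (0 <= sinh u - u * cosh u + sinh u ^ 3 / 3) by lra.
  apply (ge0_of_derive_nonneg (fun u => sinh u - u * cosh u + sinh u ^ 3 / 3)
           (fun u => sinh u * (sinh u * cosh u - u))); [lra | | |].
  - cbv beta. rewrite sinh_0, cosh_0. field.
  - intros x _. unfold sinh, cosh. auto_derive; [trivial | field].
  - intros x Hx. assert (0 <= sinh x) by (apply sinh_ge0; lra).
    assert (x <= sinh x * cosh x) by (apply le_sinh_mul_cosh; lra). nra.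
Qed.

Lemma sqr_div_sinh_sqr_add_incr a b : 0 < a <= b ->
  a * a / (sinh a * sinh a) + a * a / 3 <= b * b / (sinh b * sinh b) + b * b / 3.
Proof.
  intros Hab.
  apply (le_of_derive_nonneg (fun u => u * u / (sinh u * sinh u) + u * u / 3)
    (fun u => 2 * u * (sinh u - u * cosh u + sinh u ^ 3 / 3) / sinh u ^ 3) a b); [lra | |].
  - intros x Hx. assert (0 < sinh x) by (apply sinh_pos; lra).
    assert (N : exp x - exp (- x) <> 0) by (unfold sinh in *; lra).
    unfold sinh, cosh in *. auto_derive.
    + repeat split; auto. intro. apply N. nra.
    + field. auto.
  - intros x Hx. assert (0 < sinh x) by (apply sinh_pos; lra).
    pose proof (sinh_cube_bound x ltac:(lra)).
    apply Rdiv_le_0_compat; [nra | apply pow_lt; lra].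
Qed.

Lemma sinh_mul_sqr_ge k X : 1 <= k -> k * k * sinh X ^ 2 <= sinh (k * X) ^ 2.
Proof.
  intros Hk. rewrite <- (sinh_abs_sqr X), <- (sinh_abs_sqr (k * X)), <- mul_Rabs by lra.
  pose proof (mul_sinh_le_sinh_mul k (Rabs X) Hk (Rabs_pos X)).
  pose proof (sinh_ge0 (Rabs X) (Rabs_pos X)).
  set (s := sinh (Rabs X)) in *. set (t := sinh (k * Rabs X)) in *.
  assert (0 <= k * s) by nra. nra.
Qed.

Lemma sinh_mul_sqr_le k X : 0 <= k <= 1 -> sinh (k * X) ^ 2 <= k * k * sinh X ^ 2.
Proof.
  intros Hk. rewrite <- (sinh_abs_sqr X), <- (sinh_abs_sqr (k * X)), <- mul_Rabs by lra.
  pose proof (sinh_mul_le_mul_sinh k (Rabs X) Hk (Rabs_pos X)).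
  assert (0 <= sinh (k * Rabs X)) by (apply sinh_ge0, Rmult_le_pos; [lra | apply Rabs_pos]).
  set (s := sinh (Rabs X)) in *. set (t := sinh (k * Rabs X)) in *. nra.
Qed.

(* [k^2 tanh^2 X <= tanh^2 (k X)], with [cosh^2 = 1 + sinh^2] cleared of denominators. *)
Lemma tanh_mul_sqr_ge k X : 0 <= k <= 1 ->
  k * k * sinh X ^ 2 <= sinh (k * X) ^ 2 * (1 + (1 - k * k) * sinh X ^ 2).
Proof.
  intros Hk. rewrite <- (sinh_abs_sqr X), <- (sinh_abs_sqr (k * X)), <- mul_Rabs by lra.
  set (Y := Rabs X). assert (HY : 0 <= Y) by apply Rabs_pos.
  pose proof (mul_sinh_cosh_le k Y Hk HY) as H.
  assert (0 <= sinh Y) by (apply sinh_ge0; lra).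
  assert (0 <= cosh (k * Y)) by apply Rlt_le, cosh_pos.
  assert (0 <= k * sinh Y * cosh (k * Y)) by (apply Rmult_le_pos; [apply Rmult_le_pos |]; lra).
  assert (Hsq : (k * sinh Y * cosh (k * Y)) ^ 2 <= (sinh (k * Y) * cosh Y) ^ 2)
    by (apply pow_incr; lra).
  pose proof (cosh_sqr_sub_sinh_sqr Y). pose proof (cosh_sqr_sub_sinh_sqr (k * Y)).
  nra.
Qed.

Lemma tanh_sqr u : tanh u ^ 2 = sinh u ^ 2 / (1 + sinh u ^ 2).
Proof.
  pose proof (cosh_pos u). pose proof (cosh_sqr_sub_sinh_sqr u).
  unfold tanh. replace (1 + sinh u ^ 2) with (cosh u ^ 2) by nra. field. lra.
Qed.

Lemma tanh_pos u : 0 < u -> 0 < tanh u.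
Proof. intros. unfold tanh. apply Rdiv_lt_0_compat; [apply sinh_pos, H | apply cosh_pos]. Qed.

Lemma tanh_lt_1 u : tanh u < 1.
Proof.
  pose proof (cosh_pos u). pose proof (exp_pos (- u)). unfold tanh.
  apply Rmult_lt_reg_r with (cosh u); [lra |]. unfold Rdiv.
  rewrite Rmult_assoc, Rinv_l, Rmult_1_r, Rmult_1_l by lra. unfold sinh, cosh. lra.
Qed.

(** * Estimates behind the constant k sin (PI / (2 k)) *)

Lemma cos_ub_poly a : cos_ub a = 1 - a ^ 2 / 2 + a ^ 4 / 24 - a ^ 6 / 720 + a ^ 8 / 40320.
Proof.
  unfold cos_ub, cos_approx, cos_term. cbn [sum_f_R0 Nat.mul Nat.add].
  rewrite !fact_simpl, !mult_INR. cbn [Factorial.fact]. simpl INR. field.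
Qed.

Lemma cos_lb_poly a : cos_lb a = 1 - a ^ 2 / 2 + a ^ 4 / 24 - a ^ 6 / 720.
Proof.
  unfold cos_lb, cos_approx, cos_term. cbn [sum_f_R0 Nat.mul Nat.add].
  rewrite !fact_simpl, !mult_INR. cbn [Factorial.fact]. simpl INR. field.
Qed.

Lemma sin_lb_poly a : sin_lb a = a - a ^ 3 / 6 + a ^ 5 / 120 - a ^ 7 / 5040.
Proof.
  unfold sin_lb, sin_approx, sin_term. cbn [sum_f_R0 Nat.mul Nat.add].
  rewrite !fact_simpl, !mult_INR. cbn [Factorial.fact]. simpl INR. field.
Qed.

Lemma PI_lt_315 : PI < 315 / 100.
Proof.
  destruct (Rlt_or_le PI (315 / 100)) as [H | H]; [exact H | exfalso].
  pose proof (COS (1575 / 1000) ltac:(lra) ltac:(lra)) as H1.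
  assert (0 <= cos (1575 / 1000)) by (apply cos_ge_0; lra).
  rewrite cos_ub_poly in H1. lra.
Qed.

Lemma PI_gt_3 : 3 < PI.
Proof. pose proof PI2_3_2. lra. Qed.

Lemma sin_sqr_lower_bound_small phi : 0 < phi <= 5 / 4 ->
  3 * phi ^ 2 <= sin phi ^ 2 * (PI ^ 2 / 2 + phi ^ 2).
Proof.
  intros Hphi. pose proof PI_gt_3 as HPI.
  pose proof (SIN phi ltac:(lra) ltac:(lra)) as [H _].
  rewrite sin_lb_poly in H.
  set (t := phi ^ 2). assert (Ht : 0 < t <= 25 / 16) by (unfold t; nra).
  set (S := 1 - t / 6 + t ^ 2 / 120 - t ^ 3 / 5040).
  replace (phi - phi ^ 3 / 6 + phi ^ 5 / 120 - phi ^ 7 / 5040) with (phi * S) in H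
    by (unfold S, t; field).
  assert (HS : 747 / 1000 <= S) by (unfold S; nra).
  assert (Hsin : t * S ^ 2 <= sin phi ^ 2)
    by (replace (t * S ^ 2) with ((phi * S) ^ 2) by (unfold t; ring); apply pow_incr; nra).
  assert (Hkey : 3 <= S ^ 2 * (9 / 2 + t)).
  { destruct (Rle_or_lt t 1).
    - assert (833 / 1000 <= S) by (unfold S; nra). nra.
    - nra. }
  assert (9 / 2 <= PI ^ 2 / 2) by nra. fold t. nra.
Qed.

Lemma sin_sqr_lower_bound_large phi : 5 / 4 <= phi <= PI / 2 ->
  3 * phi ^ 2 <= sin phi ^ 2 * (PI ^ 2 / 2 + phi ^ 2).
Proof.
  intros Hphi. pose proof PI_lt_315 as HPI1. pose proof PI_gt_3 as HPI2.
  set (d := PI / 2 - phi). assert (Hd : 0 <= d <= 33 / 100) by (unfold d; lra).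
  replace (sin phi) with (cos d) by (unfold d; apply cos_shift).
  replace phi with (PI / 2 - d) by (unfold d; ring).
  pose proof (COS d ltac:(lra) ltac:(lra)) as [H _]. rewrite cos_lb_poly in H.
  assert (0 <= d ^ 4) by nra. assert (d ^ 2 <= 1) by nra.
  assert (d ^ 6 <= d ^ 4) by (replace (d ^ 6) with (d ^ 4 * d ^ 2) by ring; nra).
  assert (Hc2 : 1 - d ^ 2 <= cos d ^ 2) by nra.
  assert (0 <= PI ^ 2 / 2 + (PI / 2 - d) ^ 2) by nra.
  enough (3 * (PI / 2 - d) ^ 2 <= (1 - d ^ 2) * (PI ^ 2 / 2 + (PI / 2 - d) ^ 2)) by nra.
  assert (E : (1 - d ^ 2) * (PI ^ 2 / 2 + (PI / 2 - d) ^ 2) - 3 * (PI / 2 - d) ^ 2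
            = d * (2 * PI - 2 * d - d * (3 * PI ^ 2 / 4) + d ^ 2 * (PI - d))) by field.
  assert (0 <= 2 * PI - 2 * d - d * (3 * PI ^ 2 / 4) + d ^ 2 * (PI - d)) by nra.
  nra.
Qed.

Lemma sin_sqr_lower_bound phi : 0 < phi <= PI / 2 ->
  3 * phi ^ 2 <= sin phi ^ 2 * (PI ^ 2 / 2 + phi ^ 2).
Proof.
  intros Hphi. destruct (Rle_or_lt phi (5 / 4)).
  - apply sin_sqr_lower_bound_small; lra.
  - apply sin_sqr_lower_bound_large; lra.
Qed.

Lemma half_pi_div_range k : 1 <= k -> 0 < PI / (2 * k) <= PI / 2.
Proof.
  intros Hk. pose proof PI_RGT_0. split; [apply Rdiv_lt_0_compat; lra |].
  unfold Rdiv. apply Rmult_le_compat_l; [lra |]. apply Rinv_le_contravar; lra.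
Qed.

Lemma sin_half_pi_div_pos k : 1 <= k -> 0 < sin (PI / (2 * k)).
Proof. intros Hk. pose proof (half_pi_div_range k Hk). apply sin_gt_0; lra. Qed.

Lemma one_le_mul_sin_half_pi_div k : 1 <= k -> 1 <= k * sin (PI / (2 * k)).
Proof.
  intros Hk. pose proof (half_pi_div_range k Hk) as Hphi.
  assert (E : k * (PI / (2 * k)) = PI / 2) by (field; lra).
  pose proof (sin_mul_le_mul_sin k (PI / (2 * k)) Hk ltac:(lra) ltac:(lra)) as H.
  rewrite E, sin_PI2 in H. lra.
Qed.

Lemma inv_sin_half_pi_div_sqr_bound k : 1 <= k ->
  (k * k - 1) / 3 <= k * k - 1 / sin (PI / (2 * k)) ^ 2.
Proof.
  intros Hk. pose proof (half_pi_div_range k Hk) as Hphi.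
  pose proof (sin_half_pi_div_pos k Hk) as Hs.
  set (phi := PI / (2 * k)) in *.
  pose proof (sin_sqr_lower_bound phi Hphi) as H.
  replace PI with (2 * k * phi) in H by (unfold phi; field; lra).
  assert (H' : 3 <= sin phi ^ 2 * (2 * k * k + 1)).
  { apply Rmult_le_reg_r with (phi ^ 2); [nra |].
    replace (sin phi ^ 2 * (2 * k * k + 1) * phi ^ 2)
      with (sin phi ^ 2 * ((2 * k * phi) ^ 2 / 2 + phi ^ 2)) by field. lra. }
  assert (0 < sin phi ^ 2) by nra.
  apply Rmult_le_reg_r with (3 * sin phi ^ 2); [lra |].
  replace ((k * k - 1 / sin phi ^ 2) * (3 * sin phi ^ 2)) with (3 * k * k * sin phi ^ 2 - 3)
    by (field; lra).
  replace ((k * k - 1) / 3 * (3 * sin phi ^ 2)) with ((k * k - 1) * sin phi ^ 2) by field.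
  nra.
Qed.

(* With [A = sinh^2 X], [B = sinh^2 (k X)], [s0 = sin (PI / (2 k))] this reads
   [1 / A - k^2 / B <= k^2 - 1 / s0^2]: the left side is at most [(k^2 - 1) / 3]
   because [u^2 / sinh^2 u + u^2 / 3] increases from [X] to [k X]. *)
Lemma sinh_sqr_ratio_bound k X : 1 <= k ->
  sin (PI / (2 * k)) ^ 2 * sinh (k * X) ^ 2
  <= ((k * sin (PI / (2 * k))) ^ 2 - 1) * sinh X ^ 2 * sinh (k * X) ^ 2
     + (k * sin (PI / (2 * k))) ^ 2 * sinh X ^ 2.
Proof.
  intros Hk. rewrite <- (sinh_abs_sqr X), <- (sinh_abs_sqr (k * X)), <- mul_Rabs by lra.
  pose proof (inv_sin_half_pi_div_sqr_bound k Hk) as HE.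
  pose proof (sin_half_pi_div_pos k Hk) as Hs.
  set (s0 := sin (PI / (2 * k))) in *. set (Y := Rabs X).
  destruct (Rabs_pos X) as [HY | HY]; fold Y in HY.
  2: { rewrite <- HY, Rmult_0_r, sinh_0. lra. }
  assert (HA : 0 < sinh Y) by (apply sinh_pos; lra).
  assert (HB : 0 < sinh (k * Y)) by (apply sinh_pos; nra).
  pose proof (sqr_div_sinh_sqr_add_incr Y (k * Y) ltac:(nra)) as Hnu.
  set (A := sinh Y ^ 2). set (B := sinh (k * Y) ^ 2).
  assert (H1 : 1 / A - k * k / B <= (k * k - 1) / 3).
  { apply Rmult_le_reg_r with (Y * Y); [nra |]. unfold A, B.
    replace ((1 / sinh Y ^ 2 - k * k / sinh (k * Y) ^ 2) * (Y * Y)) with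
      (Y * Y / (sinh Y * sinh Y) - k * Y * (k * Y) / (sinh (k * Y) * sinh (k * Y)))
      by (field; lra).
    replace ((k * k - 1) / 3 * (Y * Y)) with (k * Y * (k * Y) / 3 - Y * Y / 3) by field.
    lra. }
  assert (H2 : 1 / A - k * k / B <= k * k - 1 / s0 ^ 2) by lra.
  assert (0 < A) by (unfold A; nra). assert (0 < B) by (unfold B; nra).
  apply Rmult_le_compat_r with (r := s0 ^ 2 * A * B) in H2;
    [| apply Rlt_le, Rmult_lt_0_compat; [apply Rmult_lt_0_compat |]; nra].
  replace ((1 / A - k * k / B) * (s0 ^ 2 * A * B)) with (s0 ^ 2 * B - (k * s0) ^ 2 * A) in H2
    by (field; lra).
  replace ((k * k - 1 / s0 ^ 2) * (s0 ^ 2 * A * B)) with ((k * s0) ^ 2 * A * B - A * B) in H2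
    by (field; lra).
  lra.
Qed.

(** * Polar coordinates and the hyperbolic metric *)

Definition polar (r a : R) : C := (r * cos a, r * sin a).

Lemma Cminus_pair a b c d : ((a, b) - (c, d))%C = (a - c, b - d).
Proof. reflexivity. Qed.

Lemma C_eq_dec (u v : C) : {u = v} + {u <> v}.
Proof.
  destruct u as [u1 u2], v as [v1 v2].
  destruct (Req_EM_T u1 v1) as [<- | N]; [destruct (Req_EM_T u2 v2) as [<- | N] |];
    [left; reflexivity | right; congruence ..].
Qed.

Lemma Cmod_sqr (z : C) : Cmod z ^ 2 = fst z ^ 2 + snd z ^ 2.
Proof. unfold Cmod. apply pow2_sqrt. nra. Qed.

Lemma Cmod_sub_sym (u v : C) : Cmod (u - v) = Cmod (v - u).
Proof. rewrite <- Copp_minus_distr. apply Cmod_opp. Qed.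

Lemma Cmod_pos (z : C) : z <> 0%C -> 0 < Cmod z.
Proof.
  intros Hz. destruct (Cmod_ge_0 z) as [H | H]; [exact H |].
  exfalso. apply Hz, Cmod_eq_0. auto.
Qed.

Lemma Cmod_sub_diag (x : C) : Cmod (x - x) = 0.
Proof. destruct x. unfold Cmod; simpl. rewrite <- sqrt_0. f_equal. ring. Qed.

Lemma Cmod_sub_pos (x y : C) : x <> y -> 0 < Cmod (x - y).
Proof.
  intros Hxy. apply Cmod_pos. intros E. apply Hxy.
  destruct x, y. injection E. intros. f_equal; lra.
Qed.

Lemma Cmod_sub_conj_real (y : C) t : Cmod ((t, 0) - Cconj y) = Cmod ((t, 0) - y).
Proof. destruct y. unfold Cconj. rewrite !Cminus_pair. unfold Cmod; simpl. f_equal. ring. Qed.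

Lemma Rabs_Im_sub_le (z w : C) : Rabs (snd w - snd z) <= Cmod (w - z).
Proof.
  apply le_of_sqr_le; [apply Rabs_pos | apply Cmod_ge_0 |].
  rewrite Cmod_sqr, <- Rsqr_pow2, <- Rsqr_abs, Rsqr_pow2.
  destruct z, w. simpl. pose proof (pow2_ge_0 (r1 - r)). lra.
Qed.

Lemma Cmod_polar r a : 0 <= r -> Cmod (polar r a) = r.
Proof.
  intros Hr. unfold Cmod, polar. cbn [fst snd].
  replace ((r * cos a) ^ 2 + (r * sin a) ^ 2) with (r ^ 2 * (sin a ^ 2 + cos a ^ 2)) by ring.
  rewrite sin_sqr_add_cos_sqr, Rmult_1_r. apply sqrt_pow2; lra.
Qed.

Lemma polar_neq0 r a : 0 < r -> polar r a <> 0%C.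
Proof. intros Hr E. pose proof (Cmod_polar r a ltac:(lra)) as H. rewrite E, Cmod_0 in H. lra. Qed.

Lemma carg_polar r a : 0 < r -> 0 < a < 2 * PI -> carg (polar r a) = a.
Proof.
  intros Hr Ha. unfold carg. rewrite Cmod_polar by lra. unfold polar; simpl.
  replace (r * cos a / r) with (cos a) by (field; lra).
  destruct (Rle_lt_dec a PI) as [H | H].
  - destruct (Rle_dec 0 (r * sin a)) as [_ | N].
    + apply acos_cos; lra.
    + exfalso. apply N. assert (0 <= sin a) by (apply sin_ge_0; lra). nra.
  - destruct (Rle_dec 0 (r * sin a)) as [N | _].
    + exfalso. assert (sin a < 0) by (apply sin_lt_0; lra). nra.
    + replace (cos a) with (cos (2 * PI - a)) by (rewrite cos_minus, cos_2PI, sin_2PI; ring).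
      rewrite acos_cos by lra. ring.
Qed.

Lemma polar_Cmod_carg (z : C) : z <> 0%C ->
  z = polar (Cmod z) (carg z) /\ 0 <= carg z < 2 * PI.
Proof.
  intros Hz. pose proof (Cmod_pos z Hz) as Hm. pose proof (Cmod_sqr z) as H2.
  unfold carg. destruct z as [u v]. simpl in H2 |- *. set (m := Cmod (u, v)) in *.
  assert (Hc : -1 <= u / m <= 1).
  { split; apply Rmult_le_reg_r with m; try lra;
      unfold Rdiv; rewrite Rmult_assoc, Rinv_l, Rmult_1_r by lra; nra. }
  assert (E : 1 - (u / m)² = (v / m) ^ 2).
  { unfold Rsqr. replace ((v / m) ^ 2) with (v ^ 2 / m ^ 2) by (field; lra).
    replace (v ^ 2) with (m ^ 2 - u ^ 2) by lra. field. lra. }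
  pose proof (acos_bound (u / m)) as Hacos. pose proof PI_RGT_0 as HPI.
  destruct (Rle_dec 0 v) as [Hv | Hv].
  - split; [| lra]. unfold polar. rewrite cos_acos, sin_acos, E by exact Hc.
    rewrite sqrt_pow2 by (apply Rdiv_le_0_compat; lra). f_equal; field; lra.
  - assert (Hpos : 0 < acos (u / m)).
    { destruct (proj1 Hacos) as [H | H]; [exact H | exfalso].
      assert (H1 : cos (acos (u / m)) = 1) by (rewrite <- H; apply cos_0).
      rewrite cos_acos in H1 by exact Hc.
      assert (u = m) by (unfold Rdiv in H1; apply Rmult_eq_reg_r with (/ m);
                         [rewrite H1, Rinv_r | apply Rinv_neq_0_compat]; lra).
      nra. }
    split; [| lra]. unfold polar.
    rewrite cos_minus, sin_minus, cos_2PI, sin_2PI, cos_acos, sin_acos, E by exact Hc.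
    replace ((v / m) ^ 2) with ((- v / m) ^ 2) by (field; lra).
    rewrite sqrt_pow2 by (apply Rdiv_le_0_compat; lra). f_equal; field; lra.
Qed.

Lemma sector_polar th z : 0 < th <= 2 * PI ->
  sector th z <-> exists r a, 0 < r /\ 0 < a < th /\ z = polar r a.
Proof.
  intros Hth. split.
  - intros [Hz Ha]. exists (Cmod z), (carg z).
    repeat split; try apply Cmod_pos; try lra; auto. apply polar_Cmod_carg, Hz.
  - intros (r & a & Hr & Ha & ->). split; [apply polar_neq0, Hr |]. rewrite carg_polar; lra.
Qed.

Lemma cpow_polar k r a : 0 < r -> 0 < a < 2 * PI ->
  cpow k (polar r a) = polar (Rpower r k) (k * a).
Proof. intros Hr Ha. unfold cpow. rewrite Cmod_polar, carg_polar by lra. reflexivity. Qed.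

Lemma Cconj_polar s b : Cconj (polar s b) = polar s (- b).
Proof. unfold polar, Cconj. simpl. rewrite cos_neg, sin_neg. f_equal. ring. Qed.

Lemma Cmod_polar_sub_sqr r s a b :
  Cmod (polar r a - polar s b) ^ 2 = r ^ 2 + s ^ 2 - 2 * r * s * cos (a - b).
Proof.
  unfold polar. rewrite Cminus_pair, Cmod_sqr. simpl fst; simpl snd. rewrite cos_minus.
  pose proof (sin_sqr_add_cos_sqr a). pose proof (sin_sqr_add_cos_sqr b). nra.
Qed.

(* Writing [r = M e^X], [s = M e^-X] with [M = sqrt (r s)]. *)
Lemma law_of_cosines_sinh r s w : 0 < r -> 0 < s ->
  r ^ 2 + s ^ 2 - 2 * r * s * cos w
  = 4 * r * s * (sinh ((ln r - ln s) / 2) ^ 2 + sin (w / 2) ^ 2).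
Proof.
  intros Hr Hs.
  set (X := (ln r - ln s) / 2). set (M := exp ((ln r + ln s) / 2)).
  assert (Er : r = M * exp X).
  { unfold M, X. rewrite <- exp_plus. rewrite <- (exp_ln r) at 1 by lra. f_equal. field. }
  assert (Es : s = M * exp (- X)).
  { unfold M, X. rewrite <- exp_plus. rewrite <- (exp_ln s) at 1 by lra. f_equal. field. }
  assert (Ec : cos w = 1 - 2 * sin (w / 2) * sin (w / 2))
    by (rewrite <- cos_2a_sin; f_equal; field).
  assert (exp X * exp (- X) = 1) by (rewrite <- exp_plus, Rplus_opp_r; apply exp_0).
  pose proof (exp_pos X). rewrite Ec, Er, Es. unfold sinh. rewrite exp_Ropp. field. lra.
Qed.

Lemma dist_polar_sqr r s a b : 0 < r -> 0 < s ->
  Cmod (polar r a - polar s b) ^ 2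
  = 4 * r * s * (sinh ((ln r - ln s) / 2) ^ 2 + sin ((a - b) / 2) ^ 2).
Proof. intros. rewrite Cmod_polar_sub_sqr. apply law_of_cosines_sinh; lra. Qed.

Lemma dist_polar_conj_sqr r s a b : 0 < r -> 0 < s ->
  Cmod (polar r a - Cconj (polar s b)) ^ 2
  = 4 * r * s * (sinh ((ln r - ln s) / 2) ^ 2 + sin ((a + b) / 2) ^ 2).
Proof.
  intros. rewrite Cconj_polar, Cmod_polar_sub_sqr. replace (a - - b) with (a + b) by ring.
  apply law_of_cosines_sinh; lra.
Qed.

Lemma sum_sqr_sinh r s : 0 < r -> 0 < s ->
  (r + s) ^ 2 = 4 * r * s * (sinh ((ln r - ln s) / 2) ^ 2 + 1).
Proof.
  intros. replace ((r + s) ^ 2) with (r ^ 2 + s ^ 2 - 2 * r * s * cos PI) by (rewrite cos_PI; ring).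
  rewrite law_of_cosines_sinh, sin_PI2 by lra. ring.
Qed.

Lemma tanh_half_rho_H (u v : C) : 0 < snd u -> 0 < snd v ->
  tanh (rho_H u v / 2) = Cmod (u - v) / Cmod (u - Cconj v).
Proof.
  intros Hu Hv. destruct u as [u1 u2], v as [v1 v2]. simpl in Hu, Hv.
  unfold rho_H. cbv zeta.
  set (n := Cmod ((u1, u2) - (v1, v2))). set (d := Cmod ((u1, u2) - Cconj (v1, v2))).
  assert (Hn : n ^ 2 = (u1 - v1) ^ 2 + (u2 - v2) ^ 2)
    by (unfold n; rewrite Cminus_pair, Cmod_sqr; reflexivity).
  assert (Hd : d ^ 2 = (u1 - v1) ^ 2 + (u2 + v2) ^ 2).
  { unfold d, Cconj. cbn [fst snd]. rewrite Cminus_pair, Cmod_sqr. cbn [fst snd]. ring. }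
  pose proof (Cmod_ge_0 ((u1, u2) - (v1, v2))) as Hn0.
  pose proof (Cmod_ge_0 ((u1, u2) - Cconj (v1, v2))) as Hd0.
  fold n in Hn0. fold d in Hd0.
  assert (Hnd : n < d) by nra.
  set (q := n / d).
  assert (Hq : 0 <= q < 1).
  { unfold q. split; [apply Rdiv_le_0_compat; lra |].
    apply Rmult_lt_reg_r with d; [lra |]. unfold Rdiv. rewrite Rmult_assoc, Rinv_l; lra. }
  set (w := (1 + q) / (1 - q)).
  assert (Hw : 0 < w) by (unfold w; apply Rdiv_lt_0_compat; lra).
  set (ex := exp (ln w / 2)).
  assert (Hex : 0 < ex) by apply exp_pos.
  assert (Hex2 : ex * ex = w).
  { unfold ex. rewrite <- exp_plus. replace (ln w / 2 + ln w / 2) with (ln w) by field.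
    apply exp_ln; lra. }
  unfold tanh, sinh, cosh. rewrite exp_Ropp. fold ex.
  replace ((ex - / ex) / 2 / ((ex + / ex) / 2)) with ((ex * ex - 1) / (ex * ex + 1))
    by (field; split; nra).
  rewrite Hex2. unfold w. field. lra.
Qed.

(** * The boundary of the sector *)

(* [Im (z e^(-i th))]: its sign tells on which side of the line through the ray
   [arg = th] the point [z] lies. *)
Definition Im_rot (th : R) (z : C) : R := snd z * cos th - fst z * sin th.

Lemma Im_rot_polar th r a : Im_rot th (polar r a) = r * sin (a - th).
Proof. unfold Im_rot, polar; simpl. rewrite sin_minus. ring. Qed.

Lemma Rabs_Im_rot_sub_le th (z w : C) : Rabs (Im_rot th w - Im_rot th z) <= Cmod (w - z).
Proof.
  apply le_of_sqr_le; [apply Rabs_pos | apply Cmod_ge_0 |].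
  rewrite Cmod_sqr, <- Rsqr_pow2, <- Rsqr_abs, Rsqr_pow2.
  destruct z as [z1 z2], w as [w1 w2]. unfold Im_rot. simpl.
  pose proof (sin_sqr_add_cos_sqr th) as E.
  pose proof (pow2_ge_0 ((w1 - z1) * cos th + (w2 - z2) * sin th)).
  assert (((w1 - z1) ^ 2 + (w2 - z2) ^ 2) * (sin th ^ 2 + cos th ^ 2)
          = (w2 * cos th - w1 * sin th - (z2 * cos th - z1 * sin th)) ^ 2
            + ((w1 - z1) * cos th + (w2 - z2) * sin th) ^ 2) by ring.
  rewrite E in *. lra.
Qed.

Lemma sector_iff_le_PI th z : 0 < th <= PI ->
  sector th z <-> 0 < snd z /\ Im_rot th z < 0.
Proof.
  intros Hth. pose proof PI_RGT_0 as HPI.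
  destruct (C_eq_dec z 0%C) as [-> | Hz].
  { unfold sector, Im_rot. simpl. split; [intros [H _]; congruence | lra]. }
  destruct (polar_Cmod_carg z Hz) as [E Hphi]. pose proof (Cmod_pos z Hz) as Hr.
  unfold sector. set (r := Cmod z) in *. set (phi := carg z) in *.
  rewrite E at 2 3. rewrite Im_rot_polar. unfold polar; simpl. split.
  - intros [_ Hp]. split.
    + apply Rmult_lt_0_compat; [lra |]. apply sin_gt_0; lra.
    + assert (sin (phi - th) < 0) by (apply sin_lt_0_var; lra). nra.
  - intros [H1 H2]. split; [exact Hz |].
    assert (Hs : 0 < sin phi) by (apply Rmult_lt_reg_l with r; lra).
    assert (Hs' : sin (phi - th) < 0) by (apply Rmult_lt_reg_l with r; lra).
    assert (phi <> 0) by (intros E0; rewrite E0, sin_0 in Hs; lra).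
    assert (phi < PI).
    { destruct (Rlt_or_le phi PI) as [Hq | Hq]; [exact Hq |].
      assert (sin phi <= 0) by (apply sin_le_0; lra). lra. }
    split; [lra |]. destruct (Rlt_or_le phi th) as [Hq | Hq]; [exact Hq |].
    assert (0 <= sin (phi - th)) by (apply sin_ge_0; lra). lra.
Qed.

Lemma sector_iff_gt_PI th z : PI < th < 2 * PI ->
  sector th z <-> 0 < snd z \/ Im_rot th z < 0.
Proof.
  intros Hth. pose proof PI_RGT_0 as HPI.
  destruct (C_eq_dec z 0%C) as [-> | Hz].
  { unfold sector, Im_rot. simpl. split; [intros [H _]; congruence | lra]. }
  destruct (polar_Cmod_carg z Hz) as [E Hphi]. pose proof (Cmod_pos z Hz) as Hr.
  unfold sector. set (r := Cmod z) in *. set (phi := carg z) in *.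
  rewrite E at 2 3. rewrite Im_rot_polar. unfold polar; simpl. split.
  - intros [_ Hp]. destruct (Rlt_or_le phi PI).
    + left. apply Rmult_lt_0_compat; [lra |]. apply sin_gt_0; lra.
    + right. assert (sin (phi - th) < 0) by (apply sin_lt_0_var; lra). nra.
  - intros H. split; [exact Hz |]. destruct H as [H | H].
    + assert (Hs : 0 < sin phi) by (apply Rmult_lt_reg_l with r; lra).
      assert (phi <> 0) by (intros E0; rewrite E0, sin_0 in Hs; lra).
      destruct (Rlt_or_le phi PI) as [Hq | Hq]; [lra |].
      assert (sin phi <= 0) by (apply sin_le_0; lra). lra.
    + assert (Hs : sin (phi - th) < 0) by (apply Rmult_lt_reg_l with r; lra).
      assert (phi <> 0).
      { intros E0. rewrite E0 in Hs.
        assert (0 < sin (0 - th)).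
        { replace (0 - th) with ((2 * PI - th) - 2 * PI) by ring.
          rewrite sin_minus, sin_2PI, cos_2PI, Rmult_0_r, Rmult_1_r, Rminus_0_r.
          apply sin_gt_0; lra. }
        lra. }
      split; [lra |]. destruct (Rlt_or_le phi th) as [Hq | Hq]; [exact Hq |].
      assert (0 <= sin (phi - th)) by (apply sin_ge_0; lra). lra.
Qed.

Lemma boundary_inside (G : C -> Prop) z e : is_boundary G z -> 0 < e ->
  exists w, G w /\ Cmod (w - z) < e.
Proof. intros Hb He. exact (proj1 (Hb (mkposreal e He))). Qed.

Lemma boundary_outside (G : C -> Prop) z e : is_boundary G z -> 0 < e ->
  exists w, ~ G w /\ Cmod (w - z) < e.
Proof. intros Hb He. exact (proj2 (Hb (mkposreal e He))). Qed.

Lemma boundary_le_PI th z : 0 < th <= PI -> is_boundary (sector th) z ->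
  (snd z = 0 /\ Im_rot th z <= 0) \/ (Im_rot th z = 0 /\ 0 <= snd z).
Proof.
  intros Hth Hb.
  assert (H1 : 0 <= snd z).
  { destruct (Rle_or_lt 0 (snd z)) as [H | H]; [exact H | exfalso].
    destruct (boundary_inside _ z (- snd z) Hb ltac:(lra)) as [w [Hw Hd]].
    apply sector_iff_le_PI in Hw; [| lra].
    pose proof (Rabs_Im_sub_le z w) as L. apply Rabs_le_between in L. lra. }
  assert (H2 : Im_rot th z <= 0).
  { destruct (Rle_or_lt (Im_rot th z) 0) as [H | H]; [exact H | exfalso].
    destruct (boundary_inside _ z (Im_rot th z) Hb H) as [w [Hw Hd]].
    apply sector_iff_le_PI in Hw; [| lra].
    pose proof (Rabs_Im_rot_sub_le th z w) as L. apply Rabs_le_between in L. lra. }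
  assert (H3 : ~ (0 < snd z /\ Im_rot th z < 0)).
  { intros [H3 H4].
    destruct (boundary_outside _ z (Rmin (snd z) (- Im_rot th z)) Hb) as [w [Hw Hd]].
    { apply Rmin_pos; lra. }
    apply Hw, sector_iff_le_PI; [lra |].
    pose proof (Rabs_Im_sub_le z w) as L. apply Rabs_le_between in L.
    pose proof (Rabs_Im_rot_sub_le th z w) as L'. apply Rabs_le_between in L'.
    pose proof (Rmin_l (snd z) (- Im_rot th z)). pose proof (Rmin_r (snd z) (- Im_rot th z)).
    lra. }
  destruct H1 as [H1 | H1]; [right | left]; lra.
Qed.

Lemma boundary_gt_PI th z : PI < th < 2 * PI -> is_boundary (sector th) z ->
  (snd z = 0 /\ 0 <= Im_rot th z) \/ (Im_rot th z = 0 /\ snd z <= 0).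
Proof.
  intros Hth Hb.
  assert (H1 : snd z <= 0).
  { destruct (Rle_or_lt (snd z) 0) as [H | H]; [exact H | exfalso].
    destruct (boundary_outside _ z (snd z) Hb H) as [w [Hw Hd]].
    apply Hw, sector_iff_gt_PI; [lra |]. left.
    pose proof (Rabs_Im_sub_le z w) as L. apply Rabs_le_between in L. lra. }
  assert (H2 : 0 <= Im_rot th z).
  { destruct (Rle_or_lt 0 (Im_rot th z)) as [H | H]; [exact H | exfalso].
    destruct (boundary_outside _ z (- Im_rot th z) Hb ltac:(lra)) as [w [Hw Hd]].
    apply Hw, sector_iff_gt_PI; [lra |]. right.
    pose proof (Rabs_Im_rot_sub_le th z w) as L. apply Rabs_le_between in L. lra. }
  assert (H3 : 0 <= snd z \/ Im_rot th z <= 0).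
  { destruct (Rle_or_lt 0 (snd z)) as [H | H]; [left; exact H |].
    destruct (Rle_or_lt (Im_rot th z) 0) as [H' | H']; [right; exact H' | exfalso].
    destruct (boundary_inside _ z (Rmin (- snd z) (Im_rot th z)) Hb) as [w [Hw Hd]].
    { apply Rmin_pos; lra. }
    apply sector_iff_gt_PI in Hw; [| lra].
    pose proof (Rabs_Im_sub_le z w) as L. apply Rabs_le_between in L.
    pose proof (Rabs_Im_rot_sub_le th z w) as L'. apply Rabs_le_between in L'.
    pose proof (Rmin_l (- snd z) (Im_rot th z)). pose proof (Rmin_r (- snd z) (Im_rot th z)).
    lra. }
  destruct H3; [left | right]; lra.
Qed.

Lemma boundary_real_axis th t : 0 < th < 2 * PI -> 0 <= t \/ th = PI ->
  is_boundary (sector th) (t, 0).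
Proof.
  intros Hth Ht eps. pose proof PI_RGT_0 as HPI.
  set (e := eps / 2). assert (He : 0 < e < eps) by (unfold e; destruct eps; simpl; lra).
  set (c := cos (th / 2)). set (sn := sin (th / 2)).
  assert (Hsn : 0 < sn) by (apply sin_gt_0; lra).
  assert (Hid : sn * cos th - c * sin th = - sn).
  { unfold sn, c. rewrite <- sin_minus. replace (th / 2 - th) with (- (th / 2)) by field.
    apply sin_neg. }
  assert (Hdist : forall u v, u ^ 2 + v ^ 2 = 1 -> Cmod ((t + e * u, e * v) - (t, 0)) = e).
  { intros u v Huv. rewrite Cminus_pair. unfold Cmod; simpl fst; simpl snd.
    replace ((t + e * u - t) ^ 2 + (e * v - 0) ^ 2) with (e ^ 2 * (u ^ 2 + v ^ 2)) by ring.
    rewrite Huv, Rmult_1_r. apply sqrt_pow2; lra. }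
  pose proof (sin_sqr_add_cos_sqr (th / 2)) as Hcs. fold c sn in Hcs.
  assert (Hts : th <= PI -> 0 <= t * sin th).
  { intros Hle. destruct Ht as [Ht | ->]; [| rewrite sin_PI; lra].
    apply Rmult_le_pos; [lra | apply sin_ge_0; lra]. }
  split.
  - exists (t + e * c, e * sn). split; [| rewrite Hdist; lra].
    destruct (Rle_or_lt th PI) as [Hle | Hgt].
    + apply sector_iff_le_PI; [lra |]. unfold Im_rot; simpl fst; simpl snd. split; [nra |].
      specialize (Hts Hle). nra.
    + apply sector_iff_gt_PI; [lra |]. left. simpl. nra.
  - exists (t + e * (- c), e * (- sn)). split; [| rewrite Hdist; [lra | nra]].
    destruct (Rle_or_lt th PI) as [Hle | Hgt].
    + rewrite sector_iff_le_PI by lra. simpl. nra.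
    + rewrite sector_iff_gt_PI by lra. unfold Im_rot; simpl fst; simpl snd.
      assert (0 <= t) by (destruct Ht; lra).
      assert (sin th < 0) by (apply sin_lt_0; lra). nra.
Qed.

(* [z |-> e^(i th) conj z] *)
Definition bisector_reflect (th : R) (z : C) : C :=
  (cos th * fst z + sin th * snd z, sin th * fst z - cos th * snd z).

Lemma bisector_reflect_polar th r a : bisector_reflect th (polar r a) = polar r (th - a).
Proof. unfold bisector_reflect, polar; simpl. rewrite cos_minus, sin_minus. f_equal; ring. Qed.

Lemma bisector_reflect_involutive th z : bisector_reflect th (bisector_reflect th z) = z.
Proof.
  destruct z as [u v]. unfold bisector_reflect; simpl. pose proof (sin_sqr_add_cos_sqr th) as E.
  f_equal; [transitivity (u * (sin th ^ 2 + cos th ^ 2))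
          | transitivity (v * (sin th ^ 2 + cos th ^ 2))];
    try ring; rewrite E; ring.
Qed.

Lemma Cmod_bisector_reflect_sub th z w :
  Cmod (bisector_reflect th z - bisector_reflect th w) = Cmod (z - w).
Proof.
  destruct z as [u v], w as [u' v']. unfold bisector_reflect; simpl fst; simpl snd.
  rewrite !Cminus_pair. unfold Cmod; simpl fst; simpl snd. f_equal.
  pose proof (sin_sqr_add_cos_sqr th) as E.
  replace ((u - u') ^ 2 + (v - v') ^ 2)
    with (((u - u') ^ 2 + (v - v') ^ 2) * (sin th ^ 2 + cos th ^ 2)) by (rewrite E; ring).
  ring.
Qed.

Lemma sector_bisector_reflect th z : 0 < th < 2 * PI ->
  sector th (bisector_reflect th z) <-> sector th z.
Proof.
  intros Hth.
  assert (H : forall w, sector th w -> sector th (bisector_reflect th w)).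
  { intros w Hw. apply sector_polar in Hw; [| lra]. destruct Hw as (r & a & Hr & Ha & ->).
    rewrite bisector_reflect_polar. apply sector_polar; [lra |]. exists r, (th - a).
    repeat split; lra. }
  split; [| apply H]. intros Hz. rewrite <- (bisector_reflect_involutive th z). apply H, Hz.
Qed.

Lemma boundary_bisector_reflect th z : 0 < th < 2 * PI ->
  is_boundary (sector th) z -> is_boundary (sector th) (bisector_reflect th z).
Proof.
  intros Hth Hb eps. destruct (Hb eps) as [[w [Hw Hd]] [w' [Hw' Hd']]].
  split; [exists (bisector_reflect th w) | exists (bisector_reflect th w')];
    rewrite sector_bisector_reflect, Cmod_bisector_reflect_sub by exact Hth; auto.
Qed.

Lemma boundary_cases th z : 0 < th < 2 * PI -> th <> PI -> is_boundary (sector th) z ->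
  exists t, 0 <= t /\ (z = (t, 0) \/ bisector_reflect th z = (t, 0)).
Proof.
  intros Hth Hne Hb. destruct z as [u v].
  assert (Hrot : Im_rot th (u, v) = - snd (bisector_reflect th (u, v)))
    by (unfold Im_rot, bisector_reflect; simpl; ring).
  assert (Hv : v = sin th * fst (bisector_reflect th (u, v))
                   - cos th * snd (bisector_reflect th (u, v))).
  { unfold bisector_reflect; simpl. pose proof (sin_sqr_add_cos_sqr th) as E.
    transitivity (v * (sin th ^ 2 + cos th ^ 2)); [rewrite E |]; ring. }
  destruct (bisector_reflect th (u, v)) as [u' v'] eqn:Eref. simpl in Hrot, Hv.
  unfold Im_rot in Hrot; simpl in Hrot.
  destruct (Rle_or_lt th PI) as [Hle | Hgt].
  - assert (0 < sin th) by (apply sin_gt_0; lra).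
    destruct (boundary_le_PI th (u, v) ltac:(lra) Hb) as [[H1 H2] | [H1 H2]];
      simpl in H1, H2; unfold Im_rot in H1, H2; simpl in H1, H2.
    + exists u. split; [nra | left; congruence].
    + exists u'. assert (v' = 0) by lra. subst v'. split; [nra | right; reflexivity].
  - assert (sin th < 0) by (apply sin_lt_0; lra).
    destruct (boundary_gt_PI th (u, v) ltac:(lra) Hb) as [[H1 H2] | [H1 H2]];
      simpl in H1, H2; unfold Im_rot in H1, H2; simpl in H1, H2.
    + exists u. split; [nra | left; congruence].
    + exists u'. assert (v' = 0) by lra. subst v'. split; [nra | right; reflexivity].
Qed.

Lemma boundary_half_plane z : is_boundary (sector PI) z -> snd z = 0.
Proof.
  intros Hb. pose proof PI_RGT_0 as HPI.
  destruct (boundary_le_PI PI z ltac:(lra) Hb) as [[H _] | [H _]]; [exact H |].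
  unfold Im_rot in H. rewrite cos_PI, sin_PI in H. lra.
Qed.

(** * The triangular ratio metric *)

Definition detour (x y z : C) : R := Cmod (x - z) + Cmod (z - y).

Definition detours (th : R) (x y : C) (r : R) : Prop :=
  exists z, is_boundary (sector th) z /\ r = detour x y z.

Definition detour_inf (th : R) (x y : C) : R := real (Glb_Rbar (detours th x y)).

Lemma s_metric_sector th x y : s_metric (sector th) x y = Cmod (x - y) / detour_inf th x y.
Proof. reflexivity. Qed.

Lemma detour_ge_dist (x y z : C) : Cmod (x - y) <= detour x y z.
Proof.
  unfold detour. replace (x - y)%C with ((x - z) + (z - y))%C by ring. apply Cmod_triangle.
Qed.

Lemma detour_bisector_reflect th x y z :
  detour (bisector_reflect th x) (bisector_reflect th y) (bisector_reflect th z) = detour x y z.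
Proof. unfold detour. rewrite !Cmod_bisector_reflect_sub. reflexivity. Qed.

Lemma detour_sym x y z : detour x y z = detour y x z.
Proof. unfold detour. rewrite (Cmod_sub_sym x z), (Cmod_sub_sym z y). ring. Qed.

Section DetourInf.
Variables (th : R) (x y : C).
Hypothesis boundary_ne : exists z0, is_boundary (sector th) z0.

Lemma detour_inf_glb : Glb_Rbar (detours th x y) = Finite (detour_inf th x y).
Proof.
  destruct boundary_ne as [z0 Hz0].
  destruct (Glb_Rbar_correct (detours th x y)) as [Hlb Hg].
  assert (H0 : Rbar_le 0 (Glb_Rbar (detours th x y))).
  { apply Hg. intros r [z [_ ->]]. simpl. unfold detour.
    pose proof (Cmod_ge_0 (x - z)). pose proof (Cmod_ge_0 (z - y)). lra. }
  unfold detour_inf.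
  destruct (Glb_Rbar _) as [v | |]; [reflexivity | | contradiction].
  exfalso. exact (Hlb (detour x y z0) (ex_intro _ z0 (conj Hz0 eq_refl))).
Qed.

Lemma detour_inf_le z : is_boundary (sector th) z -> detour_inf th x y <= detour x y z.
Proof.
  intros Hz. pose proof (proj1 (Glb_Rbar_correct (detours th x y))) as Hlb.
  rewrite detour_inf_glb in Hlb.
  apply (Hlb (detour x y z)). exists z. split; [exact Hz | reflexivity].
Qed.

Lemma detour_inf_ge L : (forall z, is_boundary (sector th) z -> L <= detour x y z) ->
  L <= detour_inf th x y.
Proof.
  intros H. pose proof (proj2 (Glb_Rbar_correct (detours th x y))) as Hg.
  rewrite detour_inf_glb in Hg.
  apply (Hg (Finite L)). intros r [z [Hz ->]]. apply H, Hz.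
Qed.

Lemma dist_le_detour_inf : Cmod (x - y) <= detour_inf th x y.
Proof. apply detour_inf_ge. intros z _. apply detour_ge_dist. Qed.

Lemma s_metric_nonneg : 0 <= s_metric (sector th) x y.
Proof.
  rewrite s_metric_sector. pose proof dist_le_detour_inf. pose proof (Cmod_ge_0 (x - y)).
  destruct (Req_dec (detour_inf th x y) 0) as [-> | N].
  - rewrite Rdiv_0_r. lra.
  - apply Rdiv_le_0_compat; lra.
Qed.

Lemma s_metric_le_of_detour_ge L : 0 < L ->
  (forall z, is_boundary (sector th) z -> L <= detour x y z) ->
  s_metric (sector th) x y <= Cmod (x - y) / L.
Proof.
  intros HL H. rewrite s_metric_sector. pose proof (detour_inf_ge L H).
  unfold Rdiv. apply Rmult_le_compat_l; [apply Cmod_ge_0 |]. apply Rinv_le_contravar; lra.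
Qed.

Lemma s_metric_le_1 : x <> y -> s_metric (sector th) x y <= 1.
Proof.
  intros Hxy. pose proof (Cmod_sub_pos x y Hxy).
  replace 1 with (Cmod (x - y) / Cmod (x - y)) by (field; lra).
  apply s_metric_le_of_detour_ge; [lra |]. intros z _. apply detour_ge_dist.
Qed.

Lemma mul_s_metric_le c T : x <> y -> 0 <= T ->
  (forall z, is_boundary (sector th) z -> c * Cmod (x - y) <= T * detour x y z) ->
  c * s_metric (sector th) x y <= T.
Proof.
  intros Hxy HT H. pose proof (Cmod_sub_pos x y Hxy) as Hd. pose proof s_metric_nonneg as Hs.
  destruct (Rle_or_lt c 0) as [Hc | Hc]; [nra |].
  destruct boundary_ne as [z0 Hz0].
  assert (HT' : 0 < T).
  { specialize (H z0 Hz0). pose proof (detour_ge_dist x y z0). destruct HT; [lra | subst; nra]. }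
  assert (Hle : s_metric (sector th) x y <= Cmod (x - y) / (c * Cmod (x - y) / T)).
  { apply s_metric_le_of_detour_ge.
    - apply Rdiv_lt_0_compat; [apply Rmult_lt_0_compat |]; lra.
    - intros z Hz. specialize (H z Hz). apply Rmult_le_reg_r with T; [lra |].
      unfold Rdiv. rewrite Rmult_assoc, Rinv_l; lra. }
  replace (Cmod (x - y) / (c * Cmod (x - y) / T)) with (T / c) in Hle by (field; lra).
  apply Rmult_le_compat_l with (r := c) in Hle; [| lra].
  replace (c * (T / c)) with T in Hle by (field; lra). exact Hle.
Qed.

End DetourInf.

Lemma s_metric_ge_of_boundary th x y z : is_boundary (sector th) z -> x <> y ->
  Cmod (x - y) / detour x y z <= s_metric (sector th) x y.
Proof.
  intros Hz Hxy. pose proof (Cmod_sub_pos x y Hxy). rewrite s_metric_sector.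
  assert (Hne : exists z0, is_boundary (sector th) z0) by (exists z; exact Hz).
  pose proof (dist_le_detour_inf th x y Hne). pose proof (detour_inf_le th x y Hne z Hz).
  unfold Rdiv. apply Rmult_le_compat_l; [lra |]. apply Rinv_le_contravar; lra.
Qed.

Lemma le_mul_s_metric th x y c T z : is_boundary (sector th) z -> x <> y -> 0 <= T ->
  T * detour x y z <= c * Cmod (x - y) -> T <= c * s_metric (sector th) x y.
Proof.
  intros Hz Hxy HT H. pose proof (Cmod_sub_pos x y Hxy) as Hd.
  pose proof (detour_ge_dist x y z) as Hdz.
  pose proof (s_metric_ge_of_boundary th x y z Hz Hxy) as Hs.
  assert (Hc : 0 <= c) by nra.
  apply Rle_trans with (c * (Cmod (x - y) / detour x y z)); [| apply Rmult_le_compat_l; lra].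
  apply Rmult_le_reg_r with (detour x y z); [lra |].
  unfold Rdiv. rewrite Rmult_assoc, (Rmult_assoc _ (/ _)), Rinv_l, Rmult_1_r; lra.
Qed.

Lemma s_metric_self th x : s_metric (sector th) x x = 0.
Proof. rewrite s_metric_sector, Cmod_sub_diag. apply Rdiv_0_l. Qed.

Lemma detour_real_ge_conj (x y : C) t : Cmod (x - Cconj y) <= detour x y (t, 0).
Proof.
  unfold detour. rewrite <- (Cmod_sub_conj_real y t). apply (detour_ge_dist x (Cconj y) (t, 0)).
Qed.

Lemma sub_mul_cos_le_dist r a t : 0 <= r -> r - t * cos a <= Cmod (polar r a - (t, 0)).
Proof.
  intros Hr.
  destruct (Rle_or_lt (r - t * cos a) 0); [pose proof (Cmod_ge_0 (polar r a - (t, 0))); lra |].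
  apply le_of_sqr_le; [lra | apply Cmod_ge_0 |].
  replace (t, 0) with (polar t 0) by (unfold polar; rewrite cos_0, sin_0; f_equal; ring).
  rewrite Cmod_polar_sub_sqr, Rminus_0_r. pose proof (sin_sqr_add_cos_sqr a).
  pose proof (pow2_ge_0 (t * sin a)). nra.
Qed.

Lemma detour_real_ge_sum r s a b t : 0 <= r -> 0 <= s -> 0 <= t -> cos a + cos b <= 0 ->
  r + s <= detour (polar r a) (polar s b) (t, 0).
Proof.
  intros Hr Hs Ht Hc. unfold detour. rewrite (Cmod_sub_sym (t, 0)).
  pose proof (sub_mul_cos_le_dist r a t Hr). pose proof (sub_mul_cos_le_dist s b t Hs).
  assert (0 <= t * - (cos a + cos b)) by (apply Rmult_le_pos; lra). lra.
Qed.

Lemma detour_real_crossing (x w : C) : 0 < snd x -> snd w < 0 ->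
  let t := (fst x * - snd w + fst w * snd x) / (snd x - snd w) in
  detour x w (t, 0) = Cmod (x - w).
Proof.
  intros Hx Hw t. unfold detour. destruct x as [x1 x2], w as [w1 w2]. simpl in *.
  set (l := - w2 / (x2 - w2)).
  assert (Hl : 0 <= l <= 1).
  { unfold l. split; [apply Rdiv_le_0_compat; lra |]. apply Rmult_le_reg_r with (x2 - w2); [lra |].
    unfold Rdiv. rewrite Rmult_assoc, Rinv_l; lra. }
  assert (E1 : ((x1, x2) - (t, 0))%C = ((1 - l) * (x1 - w1), (1 - l) * (x2 - w2))).
  { rewrite Cminus_pair. unfold t, l. f_equal; field; lra. }
  assert (E2 : ((t, 0) - (w1, w2))%C = (l * (x1 - w1), l * (x2 - w2))).
  { rewrite Cminus_pair. unfold t, l. f_equal; field; lra. }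
  assert (M : forall c u v, 0 <= c -> Cmod (c * u, c * v) = c * Cmod (u, v)).
  { intros c u v Hc. unfold Cmod; cbn [fst snd].
    replace ((c * u) ^ 2 + (c * v) ^ 2) with (c ^ 2 * (u ^ 2 + v ^ 2)) by ring.
    rewrite sqrt_mult, sqrt_pow2 by (try apply pow2_ge_0; nra). reflexivity. }
  rewrite E1, E2, Cminus_pair, !M by lra. ring.
Qed.

Lemma detour_real_eq_conj r s a b : 0 < r -> 0 < s -> 0 < a < PI -> 0 < b < PI ->
  0 <= sin (a + b) ->
  exists t, 0 <= t /\ detour (polar r a) (polar s b) (t, 0) = Cmod (polar r a - Cconj (polar s b)).
Proof.
  intros Hr Hs Ha Hb Hab.
  assert (0 < r * sin a) by (apply Rmult_lt_0_compat; [lra | apply sin_gt_0; lra]).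
  assert (0 < s * sin b) by (apply Rmult_lt_0_compat; [lra | apply sin_gt_0; lra]).
  pose proof (detour_real_crossing (polar r a) (Cconj (polar s b))) as Hc.
  unfold polar, Cconj in Hc |- *; simpl in Hc |- *.
  eexists. split; [| unfold detour; rewrite <- Cmod_sub_conj_real; apply Hc; lra].
  apply Rdiv_le_0_compat; [| lra].
  replace (r * cos a * - - (s * sin b) + s * cos b * (r * sin a)) with (r * s * sin (a + b))
    by (rewrite sin_plus; ring).
  apply Rmult_le_pos; [apply Rmult_le_pos |]; lra.
Qed.

Lemma detour_real_eq_dist r s a b : 0 < r -> 0 < s -> 0 < a < PI -> PI < b < 2 * PI ->
  0 <= sin (a - b) ->
  exists t, 0 <= t /\ detour (polar r a) (polar s b) (t, 0) = Cmod (polar r a - polar s b).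
Proof.
  intros Hr Hs Ha Hb Hab.
  assert (0 < r * sin a) by (apply Rmult_lt_0_compat; [lra | apply sin_gt_0; lra]).
  assert (sin b < 0) by (apply sin_lt_0; lra).
  pose proof (detour_real_crossing (polar r a) (polar s b)) as Hc.
  unfold polar in Hc |- *; simpl in Hc |- *.
  eexists. split; [| apply Hc; nra].
  apply Rdiv_le_0_compat; [| nra].
  replace (r * cos a * - (s * sin b) + s * cos b * (r * sin a)) with (r * s * sin (a - b))
    by (rewrite sin_minus; ring).
  apply Rmult_le_pos; [apply Rmult_le_pos |]; lra.
Qed.

Lemma detour_origin r s a b : 0 <= r -> 0 <= s -> detour (polar r a) (polar s b) (0, 0) = r + s.
Proof.
  intros Hr Hs. unfold detour. rewrite (Cmod_sub_sym (0, 0)).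
  assert (E : forall u c, (polar u c - (0, 0))%C = polar u c)
    by (intros; unfold polar; rewrite Cminus_pair; f_equal; ring).
  rewrite !E, !Cmod_polar by assumption. reflexivity.
Qed.

Lemma prod_sum_le c A B p q p' q' : 0 <= A -> c * A <= B -> p <= q ->
  q' - p' <= c * (q - p) -> p * q' <= p' * q ->
  (A + p) * (B + q') <= (B + p') * (A + q).
Proof.
  intros HA HAB Hpq H1 H2.
  assert (0 <= (B - c * A) * (q - p)) by (apply Rmult_le_pos; lra).
  assert (0 <= A * (c * (q - p) - (q' - p'))) by (apply Rmult_le_pos; lra).
  nra.
Qed.

Lemma prod_sum_ge c A B p Q p' q' : 0 <= A -> B <= c * A -> p <= Q ->
  c * (Q - p) <= q' - p' -> p' * Q <= p * q' ->
  (B + p') * (A + Q) <= (A + p) * (B + q').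
Proof.
  intros HA HAB HpQ H1 H2.
  assert (0 <= (c * A - B) * (Q - p)) by (apply Rmult_le_pos; lra).
  assert (0 <= A * (q' - p' - c * (Q - p))) by (apply Rmult_le_pos; lra).
  nra.
Qed.

Lemma prod_sum_le_const k s0 A B p q p' q' : 1 <= k -> 0 < s0 -> 1 <= k * s0 ->
  0 <= A -> 0 <= B -> 0 <= p -> 0 <= q' ->
  A <= s0 * s0 * B -> s0 * s0 * B <= ((k * s0) ^ 2 - 1) * A * B + (k * s0) ^ 2 * A ->
  p' <= k * k * p -> q <= s0 * s0 * q' -> 0 <= q <= s0 * s0 ->
  (B + p') * (A + q) <= (k * s0) ^ 2 * (A + p) * (B + q').
Proof.
  intros Hk Hs0 HK HA HB Hp Hq' H1 HE H2 H3 Hq.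
  assert (HK1 : 1 <= (k * s0) ^ 2) by nra.
  set (K2 := (k * s0) ^ 2) in *. assert (HK2 : K2 = k * k * (s0 * s0)) by (unfold K2; ring).
  assert (Hs2 : 0 < s0 * s0) by nra.
  assert (L1 : (B + p') * (A + q) <= (B + k * k * p) * (A + q)).
  { assert (0 <= (k * k * p - p') * (A + q)) by (apply Rmult_le_pos; lra). lra. }
  assert (L3 : k * k * (A + p) * (s0 * s0 * B + q) <= K2 * (A + p) * (B + q')).
  { assert (0 <= k * k * (A + p) * (s0 * s0 * q' - q))
      by (apply Rmult_le_pos; [apply Rmult_le_pos |]; nra).
    rewrite HK2. nra. }
  assert (Ep : k * k * p * A <= K2 * p * B).
  { assert (0 <= k * k * p * (s0 * s0 * B - A)) by (apply Rmult_le_pos; nra). rewrite HK2. nra. }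
  assert (Eq : s0 * s0 * (A * B + B * q) <= s0 * s0 * (K2 * A * B + k * k * A * q)).
  { assert (0 <= A * B) by nra.
    destruct (Rle_or_lt (s0 * s0 * B) (K2 * A)) as [Hc | Hc].
    - assert (0 <= q * (K2 * A - s0 * s0 * B)) by (apply Rmult_le_pos; lra).
      assert (0 <= s0 * s0 * ((K2 - 1) * A * B)).
      { apply Rmult_le_pos; [lra |]. nra. }
      rewrite HK2 in *. nra.
    - assert (0 <= (s0 * s0 - q) * (s0 * s0 * B - K2 * A)) by (apply Rmult_le_pos; lra).
      assert (0 <= s0 * s0 * ((K2 - 1) * A * B + K2 * A - s0 * s0 * B))
        by (apply Rmult_le_pos; lra).
      rewrite HK2 in *. nra. }
  assert (A * B + B * q <= K2 * A * B + k * k * A * q)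
    by (apply Rmult_le_reg_l with (s0 * s0); lra).
  assert (L2 : (B + k * k * p) * (A + q) <= k * k * (A + p) * (s0 * s0 * B + q))
    by (rewrite HK2 in *; nra).
  lra.
Qed.

Lemma prod_sum_le_tanh k A B p p' q' Q : 0 < k <= 1 -> 0 <= A -> 0 <= B ->
  k * k * A <= B * (1 + (1 - k * k) * A) -> 0 <= p -> 0 <= q' <= Q -> Q <= 1 ->
  k * k * p <= Q -> k * k * p <= p' -> k * k * p * q' <= p' * Q ->
  k * k * (A + p) * (B + q') <= (B + p') * (A + Q).
Proof.
  intros Hk HA HB HE Hp Hq HQ H1 H2 H3.
  set (c := Q - k * k * p).
  assert (0 <= k * k * p) by (apply Rmult_le_pos; nra).
  assert (Hc : 0 <= c <= 1) by (unfold c; lra).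
  assert (Hk2 : 0 <= 1 - k * k) by nra.
  assert (F1 : c * ((1 - k * k) * A * B) <= (1 - k * k) * A * B).
  { assert (0 <= (1 - c) * ((1 - k * k) * A * B))
      by (apply Rmult_le_pos; [| apply Rmult_le_pos; [apply Rmult_le_pos |]]; lra). lra. }
  assert (F2 : c * (k * k * A) <= c * (B * (1 + (1 - k * k) * A)))
    by (apply Rmult_le_compat_l; lra).
  assert (F3 : 0 <= k * k * (Q - q') * A) by (apply Rmult_le_pos; [apply Rmult_le_pos; nra | lra]).
  assert (F4 : 0 <= (k * k - k * k * k * k) * p * A)
    by (apply Rmult_le_pos; [apply Rmult_le_pos; nra | lra]).
  assert (F5 : 0 <= (p' - k * k * p) * A) by (apply Rmult_le_pos; lra).
  unfold c in *. nra.
Qed.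

Lemma sin_sqr_le u v : 0 <= u <= v -> v <= PI / 2 -> sin u ^ 2 <= sin v ^ 2.
Proof.
  intros. pose proof PI_RGT_0. apply pow_incr.
  split; [apply sin_ge_0 | apply sin_incr_1]; lra.
Qed.

Lemma sqr_mul_le_sqr_mul u v w z : 0 <= u -> 0 <= w -> u * w <= v * z ->
  u ^ 2 * w ^ 2 <= v ^ 2 * z ^ 2.
Proof.
  intros Hu Hw H. rewrite <- !Rpow_mult_distr. apply pow_incr.
  split; [apply Rmult_le_pos |]; assumption.
Qed.

Lemma sqr_mul_le_div_mul c w P Q N D : 0 < w -> 0 < D -> c * c * P * D <= N * Q ->
  c ^ 2 * (w * P) <= N / D * (w * Q).
Proof.
  intros Hw HD H. apply Rmult_le_reg_r with D; [lra |].
  replace (N / D * (w * Q) * D) with (w * (N * Q)) by (field; lra).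
  replace (c ^ 2 * (w * P) * D) with (w * (c * c * P * D)) by ring.
  apply Rmult_le_compat_l; lra.
Qed.

Lemma div_mul_le_sqr_mul c w P Q N D : 0 < w -> 0 < D -> N * Q <= c * c * P * D ->
  N / D * (w * Q) <= c ^ 2 * (w * P).
Proof.
  intros Hw HD H. apply Rmult_le_reg_r with D; [lra |].
  replace (N / D * (w * Q) * D) with (w * (N * Q)) by (field; lra).
  replace (c ^ 2 * (w * P) * D) with (w * (c * c * P * D)) by ring.
  apply Rmult_le_compat_l; lra.
Qed.

Section PolarPair.

Variables th r s a b : R.
Hypotheses (Hth : 0 < th < 2 * PI) (Hr : 0 < r) (Hs : 0 < s) (Ha : 0 < a < th) (Hb : 0 < b < th).

Local Notation k := (PI / th).
Local Notation X := ((ln r - ln s) / 2).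
Local Notation e := (Rabs ((a - b) / 2)).
Local Notation m := ((a + b) / 2).
Local Notation x := (polar r a).
Local Notation y := (polar s b).
Local Notation T := (tanh (rho_S th x y / 2)).

Lemma k_mul_th : k * th = PI.
Proof. field. lra. Qed.

Lemma k_pos : 0 < k.
Proof. apply Rdiv_lt_0_compat; [apply PI_RGT_0 | lra]. Qed.

Lemma k_mul_lt_PI u : 0 <= u < th -> k * u < PI.
Proof. intros Hu. pose proof k_mul_th. pose proof k_pos. nra. Qed.

Lemma half_diff_range : 0 <= e < m /\ m + e < th.
Proof.
  pose proof (Rabs_pos ((a - b) / 2)).
  unfold Rabs. destruct (Rcase_abs ((a - b) / 2)); lra.
Qed.

Lemma k_mul_half_diff_range : 0 <= k * e < PI / 2.
Proof.
  pose proof k_pos. pose proof k_mul_th. pose proof half_diff_range.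
  set (d := Rabs _) in *. split; nra.
Qed.

Lemma sin_sqr_half_diff : sin ((a - b) / 2) ^ 2 = sin e ^ 2.
Proof. symmetry. apply sin_abs_sqr. Qed.

Lemma sin_sqr_mul_half_diff : sin (k * ((a - b) / 2)) ^ 2 = sin (k * e) ^ 2.
Proof. rewrite mul_Rabs by (pose proof k_pos; lra). symmetry. apply sin_abs_sqr. Qed.

Lemma sin_sqr_half_sum_sub : sin m ^ 2 - sin e ^ 2 = sin a * sin b.
Proof. rewrite <- sin_sqr_half_diff, sin_sqr_sub_sin_sqr. f_equal; f_equal; field. Qed.

Lemma sin_sqr_mul_half_sum_sub : sin (k * m) ^ 2 - sin (k * e) ^ 2 = sin (k * a) * sin (k * b).
Proof. rewrite <- sin_sqr_mul_half_diff, sin_sqr_sub_sin_sqr. f_equal; f_equal; field; lra. Qed.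

Lemma sin_mul_pos u : 0 < u < th -> 0 < sin (k * u).
Proof.
  intros Hu. pose proof k_pos. apply sin_gt_0; [nra | apply k_mul_lt_PI; lra].
Qed.

Lemma dist_sqr : Cmod (x - y) ^ 2 = 4 * r * s * (sinh X ^ 2 + sin e ^ 2).
Proof. rewrite dist_polar_sqr, sin_sqr_half_diff by lra. reflexivity. Qed.

Lemma dist_conj_sqr : Cmod (x - Cconj y) ^ 2 = 4 * r * s * (sinh X ^ 2 + sin m ^ 2).
Proof. apply dist_polar_conj_sqr; lra. Qed.

Lemma tanh_half_rho_S_polar :
  0 <= T /\ 0 < sinh (k * X) ^ 2 + sin (k * m) ^ 2 /\
  T ^ 2 = (sinh (k * X) ^ 2 + sin (k * e) ^ 2) / (sinh (k * X) ^ 2 + sin (k * m) ^ 2).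
Proof.
  pose proof (sin_mul_pos a Ha). pose proof (sin_mul_pos b Hb).
  assert (Hm : 0 < sin (k * m)) by (apply sin_mul_pos; pose proof half_diff_range; lra).
  pose proof (pow2_ge_0 (sinh (k * X))).
  unfold rho_S. rewrite !cpow_polar by lra.
  rewrite tanh_half_rho_H by (unfold polar; simpl; apply Rmult_lt_0_compat; [apply exp_pos | auto]).
  pose proof (dist_polar_sqr (Rpower r k) (Rpower s k) (k * a) (k * b)
                (exp_pos _) (exp_pos _)) as N.
  pose proof (dist_polar_conj_sqr (Rpower r k) (Rpower s k) (k * a) (k * b)
                (exp_pos _) (exp_pos _)) as D.
  rewrite !ln_Rpower in N, D.
  replace ((k * ln r - k * ln s) / 2) with (k * X) in N, D by (field; lra).
  replace ((k * a - k * b) / 2) with (k * ((a - b) / 2)) in N by (field; lra).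
  replace ((k * a + k * b) / 2) with (k * m) in D by (field; lra).
  rewrite sin_sqr_mul_half_diff in N.
  set (nm := Cmod (polar (Rpower r k) (k * a) - polar (Rpower s k) (k * b))) in *.
  set (dn := Cmod (polar (Rpower r k) (k * a) - Cconj (polar (Rpower s k) (k * b)))) in *.
  assert (HR : 0 < 4 * Rpower r k * Rpower s k)
    by (apply Rmult_lt_0_compat; [apply Rmult_lt_0_compat; [lra |] |]; apply exp_pos).
  assert (Hden : 0 < sinh (k * X) ^ 2 + sin (k * m) ^ 2) by (pose proof (pow_lt _ 2 Hm); lra).
  assert (Hdn : 0 < dn).
  { apply lt_of_sqr_lt; [lra | apply Cmod_ge_0 |]. rewrite D, pow_i by lia.
    apply Rmult_lt_0_compat; lra. }
  assert (0 <= nm) by apply Cmod_ge_0.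
  split; [apply Rdiv_le_0_compat; lra |]. split; [exact Hden |].
  replace ((nm / dn) ^ 2) with (nm ^ 2 / dn ^ 2) by (field; lra).
  rewrite N, D. pose proof (exp_pos (k * ln r)). pose proof (exp_pos (k * ln s)).
  field. unfold Rpower. repeat split; lra.
Qed.

Lemma tanh_half_rho_S_le1 : T <= 1.
Proof.
  destruct tanh_half_rho_S_polar as (HT0 & Hden & HT2).
  pose proof sin_sqr_mul_half_sum_sub. pose proof (sin_mul_pos a Ha). pose proof (sin_mul_pos b Hb).
  apply le_of_sqr_le; [lra | lra |]. rewrite HT2, pow1.
  apply Rmult_le_reg_r with (sinh (k * X) ^ 2 + sin (k * m) ^ 2); [lra |].
  unfold Rdiv. rewrite Rmult_assoc, Rinv_l by lra. nra.
Qed.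

Lemma mul_dist_le_tanh_mul c L Q : 0 <= c -> 0 <= L ->
  L ^ 2 = 4 * r * s * (sinh X ^ 2 + Q) ->
  c * c * (sinh X ^ 2 + sin e ^ 2) * (sinh (k * X) ^ 2 + sin (k * m) ^ 2)
    <= (sinh (k * X) ^ 2 + sin (k * e) ^ 2) * (sinh X ^ 2 + Q) ->
  c * Cmod (x - y) <= T * L.
Proof.
  intros Hc HL EL H. destruct tanh_half_rho_S_polar as (HT0 & Hden & HT2).
  apply le_of_sqr_le; [apply Rmult_le_pos; [lra | apply Cmod_ge_0] | apply Rmult_le_pos; lra |].
  rewrite !Rpow_mult_distr, dist_sqr, EL, HT2.
  apply (sqr_mul_le_div_mul c); nra.
Qed.

Lemma tanh_mul_le_mul_dist c L Q : 0 <= c -> 0 <= L ->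
  L ^ 2 = 4 * r * s * (sinh X ^ 2 + Q) ->
  (sinh (k * X) ^ 2 + sin (k * e) ^ 2) * (sinh X ^ 2 + Q)
    <= c * c * (sinh X ^ 2 + sin e ^ 2) * (sinh (k * X) ^ 2 + sin (k * m) ^ 2) ->
  T * L <= c * Cmod (x - y).
Proof.
  intros Hc HL EL H. destruct tanh_half_rho_S_polar as (HT0 & Hden & HT2).
  apply le_of_sqr_le; [apply Rmult_le_pos; lra | apply Rmult_le_pos; [lra | apply Cmod_ge_0] |].
  rewrite !Rpow_mult_distr, dist_sqr, EL, HT2.
  apply (div_mul_le_sqr_mul c); nra.
Qed.


Lemma one_lt_k : th < PI -> 1 < k.
Proof. intros. apply Rmult_lt_reg_r with th; [lra |]. rewrite k_mul_th. lra. Qed.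

Lemma k_lt_one : PI < th -> k < 1.
Proof. intros. apply Rmult_lt_reg_r with th; [lra |]. rewrite k_mul_th. lra. Qed.

Lemma sin_half_diff_mul_sin_le : th < PI ->
  sin e ^ 2 * sin (k * m) ^ 2 <= sin (k * e) ^ 2 * sin m ^ 2.
Proof.
  intros Hlt. pose proof (one_lt_k Hlt). destruct half_diff_range as [[He0 Hem] Hme].
  destruct He0 as [He0 | <-].
  - rewrite (Rmult_comm (sin (k * e) ^ 2)). apply sqr_mul_le_sqr_mul.
    + apply sin_ge_0; lra.
    + apply sin_ge_0; [pose proof k_pos; nra | apply Rlt_le, k_mul_lt_PI; lra].
    + apply sin_div_sin_mul_incr; [lra | lra | apply Rlt_le, k_mul_lt_PI; lra].
  - rewrite Rmult_0_r, sin_0. lra.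
Qed.

Lemma dist_le_tanh_mul_detour t : th < PI -> Cmod (x - y) <= T * detour x y (t, 0).
Proof.
  intros Hlt. pose proof (one_lt_k Hlt) as Hk. pose proof half_diff_range.
  destruct tanh_half_rho_S_polar as (HT0 & _ & _).
  apply Rle_trans with (T * Cmod (x - Cconj y));
    [| apply Rmult_le_compat_l; [exact HT0 | apply detour_real_ge_conj]].
  rewrite <- (Rmult_1_l (Cmod (x - y))).
  apply (mul_dist_le_tanh_mul 1 _ (sin m ^ 2)); [lra | apply Cmod_ge_0 | apply dist_conj_sqr |].
  rewrite !Rmult_1_l.
  assert (Ha' : 0 < sin a) by (apply sin_gt_0; lra).
  assert (Hb' : 0 < sin b) by (apply sin_gt_0; lra).
  pose proof sin_sqr_half_sum_sub.
  apply (prod_sum_le (k * k)).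
  - apply pow2_ge_0.
  - apply sinh_mul_sqr_ge; lra.
  - nra.
  - assert (sin (k * a) <= k * sin a)
      by (apply sin_mul_le_mul_sin; [lra | lra | apply Rlt_le, k_mul_lt_PI; lra]).
    assert (sin (k * b) <= k * sin b)
      by (apply sin_mul_le_mul_sin; [lra | lra | apply Rlt_le, k_mul_lt_PI; lra]).
    assert (0 <= sin (k * a)) by (apply Rlt_le, sin_mul_pos; lra).
    assert (0 <= sin (k * b)) by (apply Rlt_le, sin_mul_pos; lra).
    rewrite sin_sqr_half_sum_sub, sin_sqr_mul_half_sum_sub.
    replace (k * k * (sin a * sin b)) with (k * sin a * (k * sin b)) by ring.
    apply Rmult_le_compat; lra.
  - apply sin_half_diff_mul_sin_le, Hlt.
Qed.

Lemma sin_half_pi_div_k : sin (PI / (2 * k)) = sin (th / 2).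
Proof. f_equal. field. split; [lra | apply PI_neq0]. Qed.

Lemma exists_tanh_mul_detour_le_small : th < PI -> a + b <= th ->
  exists z, is_boundary (sector th) z /\
    T * detour x y z <= PI / th * sin (th / 2) * Cmod (x - y).
Proof.
  intros Hlt Hab. pose proof PI_RGT_0 as HPI. pose proof (one_lt_k Hlt) as Hk.
  destruct half_diff_range as [[He0 Hem] Hme].
  destruct (detour_real_eq_conj r s a b Hr Hs ltac:(lra) ltac:(lra) ltac:(apply sin_ge_0; lra))
    as [t [Ht Hd]].
  exists (t, 0). split; [apply boundary_real_axis; lra |]. rewrite Hd.
  pose proof (one_le_mul_sin_half_pi_div k ltac:(lra)) as HK.
  pose proof (sin_half_pi_div_pos k ltac:(lra)) as Hs0.
  pose proof (sinh_sqr_ratio_bound k X ltac:(lra)) as HE.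
  pose proof (sinh_mul_sqr_ge k X ltac:(lra)) as HAB.
  rewrite sin_half_pi_div_k in HK, Hs0, HE.
  assert (Hkm : k * m <= PI / 2) by (pose proof k_mul_th; pose proof k_pos; nra).
  apply (tanh_mul_le_mul_dist _ _ (sin m ^ 2));
    [apply Rmult_le_pos; lra | apply Cmod_ge_0 | apply dist_conj_sqr |].
  replace (k * sin (th / 2) * (k * sin (th / 2))) with ((k * sin (th / 2)) ^ 2) by ring.
  pose proof (pow2_ge_0 (sinh X)). pose proof (pow2_ge_0 (sinh (k * X))).
  apply (prod_sum_le_const k); try lra; try apply pow2_ge_0.
  - assert (1 <= (k * sin (th / 2)) ^ 2) by nra.
    assert (sinh X ^ 2 <= (k * sin (th / 2)) ^ 2 * sinh X ^ 2) by nra.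
    assert (sin (th / 2) ^ 2 * (k * k * sinh X ^ 2) <= sin (th / 2) ^ 2 * sinh (k * X) ^ 2)
      by (apply Rmult_le_compat_l; [apply pow2_ge_0 | exact HAB]).
    nra.
  - assert (Hke : k * e < PI) by (apply k_mul_lt_PI; lra).
    assert (sin (k * e) <= k * sin e) by (apply sin_mul_le_mul_sin; lra).
    assert (0 <= sin (k * e)) by (apply sin_ge_0; [apply Rmult_le_pos |]; lra).
    assert (sin (k * e) ^ 2 <= (k * sin e) ^ 2) by (apply pow_incr; lra). nra.
  - assert (Hk2 : k * (th / 2) = PI / 2) by (field; lra).
    pose proof (sin_div_sin_mul_incr k m (th / 2) ltac:(lra) ltac:(lra) ltac:(lra)) as Hm.
    rewrite Hk2, sin_PI2 in Hm.
    assert (0 <= sin m) by (apply sin_ge_0; lra).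
    assert (sin m ^ 2 <= (sin (th / 2) * sin (k * m)) ^ 2) by (apply pow_incr; lra). nra.
  - split; [apply pow2_ge_0 |].
    pose proof (sin_sqr_le m (th / 2) ltac:(lra) ltac:(lra)). nra.
Qed.

Lemma mul_sin_half_diff_sqr_le : PI < th -> k * k * sin e ^ 2 <= sin (k * e) ^ 2.
Proof.
  intros Hgt. pose proof (k_lt_one Hgt) as Hk1. pose proof k_pos as Hk0.
  destruct half_diff_range as [[He0 Hem] Hme].
  assert (0 <= sin e) by (apply sin_ge_0; lra).
  assert (k * sin e <= sin (k * e)) by (apply mul_sin_le_sin_mul; lra).
  replace (k * k * sin e ^ 2) with ((k * sin e) ^ 2) by ring.
  apply pow_incr. split; [apply Rmult_le_pos |]; lra.
Qed.

Lemma k_mul_dist_le_tanh_mul_dist : PI < th -> PI / 2 <= e ->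
  k * Cmod (x - y) <= T * Cmod (x - y).
Proof.
  intros Hgt He. pose proof (k_lt_one Hgt) as Hk1. pose proof k_pos as Hk0.
  destruct half_diff_range as [_ Hme].
  apply (mul_dist_le_tanh_mul k _ (sin e ^ 2)); [lra | apply Cmod_ge_0 | apply dist_sqr |].
  pose proof PI_RGT_0 as HPI. pose proof k_mul_half_diff_range.
  set (d := Rabs ((a - b) / 2)) in *.
  assert (Hk : k <= sin (k * (PI / 2))).
  { pose proof (mul_sin_le_sin_mul k (PI / 2) ltac:(lra) ltac:(lra)) as Hsin.
    rewrite sin_PI2 in Hsin. lra. }
  assert (sin (k * (PI / 2)) <= sin (k * d)) by (apply sin_incr_1; nra).
  assert (k * k <= sin (k * d) ^ 2) by nra.
  pose proof (sin_sqr_le1 (k * m)). pose proof (pow2_ge_0 (sinh (k * X))).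
  assert (k * k <= 1) by nra.
  assert (k * k * sinh (k * X) ^ 2 <= sinh (k * X) ^ 2) by nra.
  assert (k * k * sin (k * m) ^ 2 <= k * k) by nra.
  assert (k * k * (sinh (k * X) ^ 2 + sin (k * m) ^ 2) <= sinh (k * X) ^ 2 + sin (k * d) ^ 2)
    by lra.
  assert (0 <= sinh X ^ 2 + sin d ^ 2)
    by (pose proof (pow2_ge_0 (sinh X)); pose proof (pow2_ge_0 (sin d)); lra).
  nra.
Qed.

Lemma k_mul_dist_le_tanh_mul Q L : PI < th ->
  L ^ 2 = 4 * r * s * (sinh X ^ 2 + Q) -> 0 <= L ->
  sin (k * m) ^ 2 <= Q <= 1 -> sin e ^ 2 <= Q ->
  k * Cmod (x - y) <= T * L.
Proof.
  intros Hgt EL HL HQ HeQ. pose proof (k_lt_one Hgt) as Hk1. pose proof k_pos as Hk0.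
  apply (mul_dist_le_tanh_mul k _ Q); [lra | exact HL | exact EL |].
  pose proof (mul_sin_half_diff_sqr_le Hgt). set (d := Rabs ((a - b) / 2)) in *.
  pose proof (pow2_ge_0 (sin d)). pose proof (pow2_ge_0 (sin (k * m))).
  assert (Hkk : 0 <= k * k <= 1) by nra.
  assert (k * k * sin d ^ 2 <= sin d ^ 2) by nra.
  apply prod_sum_le_tanh; try lra; try apply pow2_ge_0.
  - apply tanh_mul_sqr_ge; lra.
  - apply Rmult_le_compat; [apply Rmult_le_pos; lra | apply pow2_ge_0 | lra | lra].
Qed.

Lemma k_mul_dist_le_tanh_mul_detour t : PI < th -> 0 <= t ->
  k * Cmod (x - y) <= T * detour x y (t, 0).
Proof.
  intros Hgt Ht. pose proof (k_lt_one Hgt) as Hk1. pose proof k_pos as Hk0.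
  pose proof PI_RGT_0 as HPI.
  pose proof k_mul_th. destruct half_diff_range as [[He0 Hem] Hme].
  destruct tanh_half_rho_S_polar as (HT0 & _ & _).
  destruct (Rle_or_lt (PI / 2) e) as [He | He].
  { apply Rle_trans with (T * Cmod (x - y)); [apply k_mul_dist_le_tanh_mul_dist; lra |].
    apply Rmult_le_compat_l; [lra | apply detour_ge_dist]. }
  assert (Hconj : sin (k * m) ^ 2 <= sin m ^ 2 -> sin e ^ 2 <= sin m ^ 2 ->
                  k * Cmod (x - y) <= T * detour x y (t, 0)).
  { intros Hkm Hem'. apply Rle_trans with (T * Cmod (x - Cconj y));
      [| apply Rmult_le_compat_l; [lra | apply detour_real_ge_conj]].
    apply (k_mul_dist_le_tanh_mul (sin m ^ 2));
      [lra | apply dist_conj_sqr | apply Cmod_ge_0 | split; [lra | apply sin_sqr_le1] | lra]. }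
  destruct (Rle_or_lt m (PI / 2)) as [Hm | Hm].
  { apply Hconj; apply sin_sqr_le; nra. }
  destruct (Rle_or_lt m (3 * (PI / 2))) as [Hm' | Hm'].
  - apply Rle_trans with (T * (r + s)).
    + apply (k_mul_dist_le_tanh_mul 1);
        [lra | apply sum_sqr_sinh; lra | lra | split; [apply sin_sqr_le1 | lra]
        | apply sin_sqr_le1].
    + apply Rmult_le_compat_l; [lra |]. apply detour_real_ge_sum; try lra.
      rewrite form1. pose proof (cos_le_0 m ltac:(lra) ltac:(lra)).
      assert (0 <= cos ((a - b) / 2)).
      { pose proof (Rabs_le_between ((a - b) / 2) (PI / 2)) as [Hab _].
        apply cos_ge_0; apply Hab; lra. }
      replace ((a + b) / 2) with m by reflexivity. nra.
  - assert (Hsm : sin m ^ 2 = sin (2 * PI - m) ^ 2) by (rewrite sin_minus, sin_2PI, cos_2PI; ring).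
    apply Hconj; rewrite Hsm.
    + replace (sin (k * m)) with (sin (k * (th - m))) by (rewrite <- sin_PI_x; f_equal; nra).
      apply Rle_trans with (sin (th - m) ^ 2); apply sin_sqr_le; nra.
    + apply sin_sqr_le; lra.
Qed.

Lemma exists_detour_eq_dist : PI / 2 <= e ->
  exists t, 0 <= t /\ detour x y (t, 0) = Cmod (x - y).
Proof.
  intros He. unfold Rabs in He. destruct (Rcase_abs ((a - b) / 2)) as [Hn | Hn].
  - apply detour_real_eq_dist; try lra.
    replace (a - b) with (- (b - a)) by ring. rewrite sin_neg.
    assert (sin (b - a) <= 0) by (apply sin_le_0; lra). lra.
  - destruct (detour_real_eq_dist s r b a Hs Hr ltac:(lra) ltac:(lra)) as [t [Ht Hd]].
    { replace (b - a) with (- (a - b)) by ring. rewrite sin_neg.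
      assert (sin (a - b) <= 0) by (apply sin_le_0; lra). lra. }
    exists t. split; [exact Ht |]. rewrite detour_sym, Hd. apply Cmod_sub_sym.
Qed.

Lemma tanh_mul_conj_le_dist : PI < th -> m <= PI / 2 ->
  T * Cmod (x - Cconj y) <= Cmod (x - y).
Proof.
  intros Hgt Hm. pose proof (k_lt_one Hgt) as Hk1. pose proof k_pos as Hk0.
  destruct half_diff_range as [[He0 Hem] Hme].
  rewrite <- (Rmult_1_l (Cmod (x - y))).
  apply (tanh_mul_le_mul_dist 1 _ (sin m ^ 2)); [lra | apply Cmod_ge_0 | apply dist_conj_sqr |].
  rewrite !Rmult_1_l.
  assert (0 < sin a) by (apply sin_gt_0; lra). assert (0 < sin b) by (apply sin_gt_0; lra).
  assert (0 < sin a * sin b) by (apply Rmult_lt_0_compat; lra).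
  pose proof sin_sqr_half_sum_sub.
  apply (prod_sum_ge (k * k)).
  - apply pow2_ge_0.
  - apply sinh_mul_sqr_le; lra.
  - lra.
  - assert (k * sin a <= sin (k * a)) by (apply mul_sin_le_sin_mul; lra).
    assert (k * sin b <= sin (k * b)) by (apply mul_sin_le_sin_mul; lra).
    rewrite sin_sqr_half_sum_sub, sin_sqr_mul_half_sum_sub.
    replace (k * k * (sin a * sin b)) with (k * sin a * (k * sin b)) by ring.
    apply Rmult_le_compat; try apply Rmult_le_pos; lra.
  - destruct He0 as [He0 | <-]; [| rewrite Rmult_0_r, sin_0; lra].
    rewrite (Rmult_comm (sin _ ^ 2)). apply sqr_mul_le_sqr_mul.
    + apply sin_ge_0; lra.
    + apply sin_ge_0; [apply Rmult_le_pos |]; nra.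
    + apply sin_div_sin_mul_decr; lra.
Qed.

Lemma tanh_mul_sum_le_dist : PI < th -> PI / 2 < m -> m <= th / 2 -> e < PI / 2 ->
  T * (r + s) <= Cmod (x - y).
Proof.
  intros Hgt Hm Hm2 He. pose proof (k_lt_one Hgt) as Hk1. pose proof k_pos as Hk0.
  pose proof PI_RGT_0 as HPI. destruct half_diff_range as [[He0 Hem] Hme].
  rewrite <- (Rmult_1_l (Cmod (x - y))).
  apply (tanh_mul_le_mul_dist 1 _ 1); [lra | lra | apply sum_sqr_sinh; lra |].
  rewrite !Rmult_1_l.
  assert (Hkm : k * m <= PI / 2) by (pose proof k_mul_th; nra).
  assert (Hsm : sin (k * (PI / 2)) <= sin (k * m)) by (apply sin_incr_1; nra).
  assert (0 <= sin (k * (PI / 2))) by (apply sin_ge_0; nra).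
  apply (prod_sum_ge (k * k)).
  - apply pow2_ge_0.
  - apply sinh_mul_sqr_le; lra.
  - apply sin_sqr_le1.
  - pose proof (sin_sqr_sub_sin_sqr (k * (PI / 2)) (k * e)) as Hd.
    replace (k * (PI / 2) + k * e) with (k * (PI / 2 + e)) in Hd by ring.
    replace (k * (PI / 2) - k * e) with (k * (PI / 2 - e)) in Hd by ring.
    pose proof (mul_sin_le_sin_mul k (PI / 2 + e) ltac:(lra) ltac:(lra)) as H1.
    pose proof (mul_sin_le_sin_mul k (PI / 2 - e) ltac:(lra) ltac:(lra)) as H2.
    rewrite <- cos_sin in H1. rewrite sin_shift in H2.
    assert (0 <= cos e) by (apply cos_ge_0; lra).
    assert (k * cos e * (k * cos e) <= sin (k * (PI / 2 + e)) * sin (k * (PI / 2 - e)))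
      by (apply Rmult_le_compat; try apply Rmult_le_pos; lra).
    assert (sin (k * (PI / 2)) ^ 2 <= sin (k * m) ^ 2) by (apply pow_incr; lra).
    pose proof (sin_sqr_add_cos_sqr e). nra.
  - rewrite Rmult_1_r. destruct He0 as [He0 | <-]; [| rewrite Rmult_0_r, sin_0; nra].
    pose proof (sin_div_sin_mul_decr k e (PI / 2) ltac:(lra) ltac:(lra) ltac:(lra)) as Hd.
    rewrite sin_PI2, Rmult_1_l in Hd.
    assert (0 <= sin e) by (apply sin_ge_0; lra).
    assert (0 <= sin (k * e)) by (apply sin_ge_0; nra).
    assert (sin (k * e) <= sin e * sin (k * m)) by nra.
    rewrite <- Rpow_mult_distr. apply pow_incr. lra.
Qed.

Lemma exists_tanh_mul_detour_le_large : PI < th -> a + b <= th ->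
  exists z, is_boundary (sector th) z /\ T * detour x y z <= Cmod (x - y).
Proof.
  intros Hgt Hab. pose proof PI_RGT_0 as HPI. destruct half_diff_range as [[He0 Hem] Hme].
  destruct (Rle_or_lt (PI / 2) e) as [He | He].
  - destruct (exists_detour_eq_dist He) as [t [Ht Hd]].
    exists (t, 0). split; [apply boundary_real_axis; lra |]. rewrite Hd.
    pose proof tanh_half_rho_S_le1. pose proof (Cmod_ge_0 (x - y)). nra.
  - destruct (Rle_or_lt m (PI / 2)) as [Hm | Hm].
    + destruct (detour_real_eq_conj r s a b Hr Hs ltac:(lra) ltac:(lra) ltac:(apply sin_ge_0; lra))
        as [t [Ht Hd]].
      exists (t, 0). split; [apply boundary_real_axis; lra |]. rewrite Hd.
      apply tanh_mul_conj_le_dist; lra.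
    + exists (0, 0). split; [apply boundary_real_axis; lra |].
      rewrite detour_origin by lra. apply tanh_mul_sum_le_dist; lra.
Qed.

End PolarPair.

(** * The comparison inequalities *)

Lemma tanh_half_rho_S_nonneg th x y : 0 < th < 2 * PI -> sector th x -> sector th y ->
  0 <= tanh (rho_S th x y / 2).
Proof.
  intros Hth Hx Hy. apply sector_polar in Hx, Hy; try lra.
  destruct Hx as (r & a & Hr & Ha & ->), Hy as (s & b & Hs & Hb & ->).
  apply tanh_half_rho_S_polar; assumption.
Qed.

Lemma tanh_half_rho_S_diag th x : tanh (rho_S th x x / 2) = 0.
Proof.
  unfold rho_S, rho_H. cbv zeta. rewrite Cmod_sub_diag, Rdiv_0_l, Rplus_0_r, Rminus_0_r, Rdiv_1_l,
    Rinv_1, ln_1, Rdiv_0_l.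
  unfold tanh, sinh. rewrite Ropp_0, Rminus_diag, Rdiv_0_l. apply Rdiv_0_l.
Qed.

Lemma tanh_half_rho_S_bisector_reflect th x y : 0 < th < 2 * PI -> sector th x -> sector th y ->
  tanh (rho_S th (bisector_reflect th x) (bisector_reflect th y) / 2) = tanh (rho_S th x y / 2).
Proof.
  intros Hth Hx Hy. apply sector_polar in Hx, Hy; try lra.
  destruct Hx as (r & a & Hr & Ha & ->), Hy as (s & b & Hs & Hb & ->).
  rewrite !bisector_reflect_polar.
  destruct (tanh_half_rho_S_polar th r s a b) as (H0 & _ & H2); try assumption.
  destruct (tanh_half_rho_S_polar th r s (th - a) (th - b)) as (H0' & _ & H2');
    try assumption; try lra.
  replace ((th - a - (th - b)) / 2) with (- ((a - b) / 2)) in H2' by field.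
  replace (PI / th * ((th - a + (th - b)) / 2)) with (PI - PI / th * ((a + b) / 2)) in H2'
    by (field; lra).
  rewrite Rabs_Ropp, sin_PI_x in H2'.
  apply Rle_antisym; apply le_of_sqr_le; try assumption; rewrite H2, H2'; lra.
Qed.

Lemma lower_bound_of_real_axis th c : 0 < th < 2 * PI -> th <> PI ->
  (forall x y t, sector th x -> sector th y -> 0 <= t ->
     c * Cmod (x - y) <= tanh (rho_S th x y / 2) * detour x y (t, 0)) ->
  forall x y z, sector th x -> sector th y -> is_boundary (sector th) z ->
    c * Cmod (x - y) <= tanh (rho_S th x y / 2) * detour x y z.
Proof.
  intros Hth Hne H x y z Hx Hy Hz.
  destruct (boundary_cases th z Hth Hne Hz) as [t [Ht [-> | E]]]; [apply H; assumption |].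
  rewrite <- (detour_bisector_reflect th x y z), <- (Cmod_bisector_reflect_sub th x y),
    <- (tanh_half_rho_S_bisector_reflect th x y Hth Hx Hy), E.
  apply H; [apply sector_bisector_reflect .. | ]; assumption.
Qed.

(* The reflection in the bisector maps a pair with [a + b > th] to one with [a + b < th]. *)
Lemma upper_bound_of_half_sector th c : 0 < th < 2 * PI ->
  (forall r s a b, 0 < r -> 0 < s -> 0 < a < th -> 0 < b < th -> a + b <= th ->
     exists z, is_boundary (sector th) z /\
       tanh (rho_S th (polar r a) (polar s b) / 2) * detour (polar r a) (polar s b) z
       <= c * Cmod (polar r a - polar s b)) ->
  forall x y, sector th x -> sector th y ->
    exists z, is_boundary (sector th) z /\
      tanh (rho_S th x y / 2) * detour x y z <= c * Cmod (x - y).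
Proof.
  intros Hth H x y Hx Hy. pose proof Hx as Hx0. pose proof Hy as Hy0.
  apply sector_polar in Hx, Hy; try lra.
  destruct Hx as (r & a & Hr & Ha & ->), Hy as (s & b & Hs & Hb & ->).
  destruct (Rle_or_lt (a + b) th) as [Hab | Hab]; [apply H; assumption |].
  destruct (H r s (th - a) (th - b) Hr Hs ltac:(lra) ltac:(lra) ltac:(lra)) as [z [Hz Hle]].
  exists (bisector_reflect th z). split; [apply boundary_bisector_reflect; assumption |].
  rewrite <- (tanh_half_rho_S_bisector_reflect th _ _ Hth Hx0 Hy0),
    <- (detour_bisector_reflect th _ _ (bisector_reflect th z)), bisector_reflect_involutive,
    <- (Cmod_bisector_reflect_sub th (polar r a)), !bisector_reflect_polar.
  exact Hle.
Qed.

Lemma boundary_nonempty th : 0 < th < 2 * PI -> exists z, is_boundary (sector th) z.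
Proof. intros Hth. exists (0, 0). apply boundary_real_axis; lra. Qed.

Lemma s_metric_le_tanh_small th x y : 0 < th < PI -> sector th x -> sector th y ->
  s_metric (sector th) x y <= tanh (rho_S th x y / 2).
Proof.
  intros Hth Hx Hy. pose proof PI_RGT_0 as HPI.
  destruct (C_eq_dec x y) as [<- | Hxy]; [rewrite s_metric_self, tanh_half_rho_S_diag; lra |].
  rewrite <- (Rmult_1_l (s_metric _ x y)).
  pose proof (tanh_half_rho_S_nonneg th x y ltac:(lra) Hx Hy) as HT0.
  apply mul_s_metric_le; [apply boundary_nonempty; lra | exact Hxy | exact HT0 |].
  intros z Hz. clear Hxy HT0. revert x y z Hx Hy Hz.
  apply (lower_bound_of_real_axis th 1); [lra | lra |]. intros x y t Hx Hy Ht.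
  apply sector_polar in Hx, Hy; try lra.
  destruct Hx as (r & a & Hr & Ha & ->), Hy as (s & b & Hs & Hb & ->).
  rewrite Rmult_1_l. apply dist_le_tanh_mul_detour; lra.
Qed.

Lemma tanh_le_s_metric_small th x y : 0 < th < PI -> sector th x -> sector th y ->
  tanh (rho_S th x y / 2) <= PI / th * sin (th / 2) * s_metric (sector th) x y.
Proof.
  intros Hth Hx Hy. pose proof PI_RGT_0 as HPI.
  destruct (C_eq_dec x y) as [<- | Hxy]; [rewrite s_metric_self, tanh_half_rho_S_diag; lra |].
  destruct (upper_bound_of_half_sector th (PI / th * sin (th / 2))) with (x := x) (y := y)
    as [z [Hz Hle]]; try assumption; [lra | |].
  - intros r s a b Hr Hs Ha Hb Hab. apply exists_tanh_mul_detour_le_small; lra.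
  - apply (le_mul_s_metric th x y _ _ z Hz Hxy); [| exact Hle].
    apply tanh_half_rho_S_nonneg; [lra | assumption ..].
Qed.

Lemma k_mul_s_metric_le_tanh_large th x y : PI < th < 2 * PI -> sector th x -> sector th y ->
  PI / th * s_metric (sector th) x y <= tanh (rho_S th x y / 2).
Proof.
  intros Hth Hx Hy. pose proof PI_RGT_0 as HPI.
  destruct (C_eq_dec x y) as [<- | Hxy].
  { rewrite s_metric_self, tanh_half_rho_S_diag. lra. }
  pose proof (tanh_half_rho_S_nonneg th x y ltac:(lra) Hx Hy) as HT0.
  apply mul_s_metric_le; [apply boundary_nonempty; lra | exact Hxy | exact HT0 |].
  intros z Hz. clear Hxy HT0. revert x y z Hx Hy Hz.
  apply (lower_bound_of_real_axis th (PI / th)); [lra | lra |]. intros x y t Hx Hy Ht.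
  apply sector_polar in Hx, Hy; try lra.
  destruct Hx as (r & a & Hr & Ha & ->), Hy as (s & b & Hs & Hb & ->).
  apply k_mul_dist_le_tanh_mul_detour; lra.
Qed.

Lemma tanh_le_s_metric_large th x y : PI < th < 2 * PI -> sector th x -> sector th y ->
  tanh (rho_S th x y / 2) <= s_metric (sector th) x y.
Proof.
  intros Hth Hx Hy. pose proof PI_RGT_0 as HPI.
  destruct (C_eq_dec x y) as [<- | Hxy]; [rewrite s_metric_self, tanh_half_rho_S_diag; lra |].
  rewrite <- (Rmult_1_l (s_metric _ x y)).
  destruct (upper_bound_of_half_sector th 1) with (x := x) (y := y) as [z [Hz Hle]];
    try assumption; [lra | |].
  - intros r s a b Hr Hs Ha Hb Hab. rewrite Rmult_1_l. apply exists_tanh_mul_detour_le_large; lra.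
  - apply (le_mul_s_metric th x y _ _ z Hz Hxy); [| exact Hle].
    apply tanh_half_rho_S_nonneg; [lra | assumption ..].
Qed.

Lemma tanh_half_rho_S_half_plane x y : sector PI x -> sector PI y ->
  tanh (rho_S PI x y / 2) = Cmod (x - y) / Cmod (x - Cconj y).
Proof.
  intros Hx Hy. pose proof PI_RGT_0 as HPI.
  apply sector_polar in Hx, Hy; try lra.
  destruct Hx as (r & a & Hr & Ha & ->), Hy as (s & b & Hs & Hb & ->).
  unfold rho_S. replace (PI / PI) with 1 by (field; lra).
  rewrite !cpow_polar, !Rpower_1, !Rmult_1_l by lra.
  apply tanh_half_rho_H; unfold polar; simpl; apply Rmult_lt_0_compat; try apply sin_gt_0; lra.
Qed.

Lemma s_metric_eq_tanh_half_plane x y : sector PI x -> sector PI y ->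
  s_metric (sector PI) x y = tanh (rho_S PI x y / 2).
Proof.
  intros Hx Hy. pose proof PI_RGT_0 as HPI.
  destruct (C_eq_dec x y) as [<- | Hxy]; [rewrite s_metric_self, tanh_half_rho_S_diag; lra |].
  rewrite tanh_half_rho_S_half_plane by assumption.
  apply sector_iff_le_PI in Hx, Hy; try lra. destruct Hx as [Hx _], Hy as [Hy _].
  assert (Hc : snd (Cconj y) < 0) by (destruct y; simpl in *; lra).
  assert (HL : 0 < Cmod (x - Cconj y)).
  { pose proof (Rabs_Im_sub_le (Cconj y) x) as L. apply Rabs_le_between in L. lra. }
  assert (HT : 0 <= Cmod (x - y) / Cmod (x - Cconj y))
    by (apply Rdiv_le_0_compat; [apply Cmod_ge_0 | lra]).
  apply Rle_antisym.
  - rewrite <- (Rmult_1_l (s_metric _ x y)).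
    apply mul_s_metric_le; [apply boundary_nonempty; lra | exact Hxy | exact HT |].
    intros z Hz. pose proof (boundary_half_plane z Hz) as Hz0. destruct z as [t z2]. simpl in Hz0.
    subst z2.
    apply Rle_trans with (Cmod (x - y) / Cmod (x - Cconj y) * Cmod (x - Cconj y)).
    + right. field. lra.
    + apply Rmult_le_compat_l; [exact HT | apply detour_real_ge_conj].
  - rewrite <- (Rmult_1_l (s_metric _ x y)).
    pose proof (detour_real_crossing x (Cconj y) Hx Hc) as Hd. set (t := _ / _) in Hd.
    apply (le_mul_s_metric PI x y 1 _ (t, 0));
      [apply boundary_real_axis; lra | exact Hxy | exact HT |].
    unfold detour in Hd |- *. rewrite <- Cmod_sub_conj_real, Hd. right. field. lra.
Qed.

(** * Sharpness *)

Section BisectorPair.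

Variables th Y : R.
Hypotheses (Hth : 0 < th < 2 * PI) (HY : 0 < Y).

Local Notation k := (PI / th).
Local Notation x := (polar (exp (2 * Y)) (th / 2)).
Local Notation y := (polar 1 (th / 2)).

Lemma bisector_pair_in_sector : sector th x /\ sector th y.
Proof.
  split; apply sector_polar; try lra; [exists (exp (2 * Y)) | exists 1]; exists (th / 2);
    repeat split; try lra; apply exp_pos.
Qed.

Lemma bisector_pair_polar :
  (ln (exp (2 * Y)) - ln 1) / 2 = Y /\ Rabs ((th / 2 - th / 2) / 2) = 0 /\
  (th / 2 + th / 2) / 2 = th / 2 /\ k * (th / 2) = PI / 2.
Proof.
  rewrite ln_exp, ln_1. replace ((th / 2 - th / 2) / 2) with 0 by field. rewrite Rabs_R0.
  repeat split; field; lra.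
Qed.

Lemma tanh_half_rho_S_bisector : tanh (rho_S th x y / 2) = tanh (k * Y).
Proof.
  destruct bisector_pair_polar as (EX & Ee & Em & Ek).
  destruct (tanh_half_rho_S_polar th (exp (2 * Y)) 1 (th / 2) (th / 2)) as (HT0 & _ & HT2);
    try apply exp_pos; try lra.
  rewrite EX, Ee, Em, Ek, Rmult_0_r, sin_0, sin_PI2 in HT2.
  assert (Hk : 0 < k * Y)
    by (apply Rmult_lt_0_compat; [apply Rdiv_lt_0_compat; [apply PI_RGT_0 | lra] | lra]).
  pose proof (tanh_pos (k * Y) Hk). pose proof (pow2_ge_0 (sinh (k * Y))).
  assert (E : tanh (rho_S th x y / 2) ^ 2 = tanh (k * Y) ^ 2)
    by (rewrite HT2, tanh_sqr; field; lra).
  apply Rle_antisym; apply le_of_sqr_le; lra.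
Qed.

Lemma dist_bisector : Cmod (x - y) = 2 * exp Y * sinh Y.
Proof.
  destruct bisector_pair_polar as (EX & Ee & _).
  pose proof (dist_sqr (exp (2 * Y)) 1 (th / 2) (th / 2) (exp_pos _) Rlt_0_1) as D.
  rewrite EX, Ee, sin_0 in D.
  assert (E2 : exp (2 * Y) = exp Y ^ 2)
    by (replace (2 * Y) with (Y + Y) by ring; rewrite exp_plus; ring).
  assert (E : Cmod (x - y) ^ 2 = (2 * exp Y * sinh Y) ^ 2) by (rewrite D, E2; ring).
  assert (0 <= 2 * exp Y * sinh Y)
    by (pose proof (sinh_pos Y HY); pose proof (exp_pos Y); apply Rmult_le_pos; lra).
  pose proof (Cmod_ge_0 (x - y)).
  apply Rle_antisym; apply le_of_sqr_le; lra.
Qed.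

Lemma dist_conj_bisector_sqr :
  Cmod (x - Cconj y) ^ 2 = 4 * exp (2 * Y) * (sinh Y ^ 2 + sin (th / 2) ^ 2).
Proof.
  destruct bisector_pair_polar as (EX & _ & Em & _).
  rewrite dist_conj_sqr, EX, Em by (apply exp_pos || lra). ring.
Qed.

Lemma tanh_le_s_metric_bisector : tanh Y <= s_metric (sector th) x y.
Proof.
  pose proof (sinh_pos Y HY). pose proof (exp_pos Y). pose proof (cosh_pos Y).
  assert (Hxy : x <> y)
    by (intros E; pose proof dist_bisector as D; rewrite E, Cmod_sub_diag in D; nra).
  pose proof (s_metric_ge_of_boundary th x y (0, 0) ltac:(apply boundary_real_axis; lra) Hxy) as Hs.
  rewrite detour_origin, dist_bisector in Hs by (try apply Rlt_le, exp_pos; lra).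
  replace (exp (2 * Y) + 1) with (2 * exp Y * cosh Y) in Hs
    by (unfold cosh; replace (2 * Y) with (Y + Y) by ring; rewrite exp_plus, exp_Ropp; field; lra).
  unfold tanh.
  replace (sinh Y / cosh Y) with (2 * exp Y * sinh Y / (2 * exp Y * cosh Y)) by (field; lra).
  exact Hs.
Qed.

Lemma dist_ratio_bisector_sqr : 0 <= Cmod (x - y) / Cmod (x - Cconj y) /\
  (Cmod (x - y) / Cmod (x - Cconj y)) ^ 2 = sinh Y ^ 2 / (sinh Y ^ 2 + sin (th / 2) ^ 2).
Proof.
  pose proof (sinh_pos Y HY). pose proof (exp_pos Y).
  assert (0 < sin (th / 2)) by (apply sin_gt_0; lra).
  pose proof dist_conj_bisector_sqr as HL. set (L := Cmod (x - Cconj y)) in *.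
  assert (HL0 : 0 < L).
  { apply lt_of_sqr_lt; [lra | apply Cmod_ge_0 |]. rewrite HL, pow_i by lia.
    apply Rmult_lt_0_compat; [apply Rmult_lt_0_compat; [lra | apply exp_pos] | nra]. }
  rewrite dist_bisector. split; [apply Rdiv_le_0_compat; nra |].
  replace ((2 * exp Y * sinh Y / L) ^ 2) with ((2 * exp Y * sinh Y) ^ 2 / L ^ 2) by (field; lra).
  rewrite HL. replace (2 * Y) with (Y + Y) by ring. rewrite exp_plus. field. split; nra.
Qed.

Lemma s_metric_bisector_le_small : th < PI ->
  s_metric (sector th) x y <= Cmod (x - y) / Cmod (x - Cconj y).
Proof.
  intros Hlt. pose proof (sinh_pos Y HY). pose proof (exp_pos (2 * Y)).
  assert (0 < sin (th / 2)) by (apply sin_gt_0; lra).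
  apply s_metric_le_of_detour_ge; [apply boundary_nonempty; lra | |].
  - apply lt_of_sqr_lt; [lra | apply Cmod_ge_0 |]. rewrite dist_conj_bisector_sqr, pow_i by lia.
    apply Rmult_lt_0_compat; [lra | apply Rplus_lt_0_compat; apply pow_lt; lra].
  - intros z Hz. destruct (boundary_cases th z) as [t [Ht [-> | E]]]; try lra; try assumption.
    + apply detour_real_ge_conj.
    + rewrite <- (detour_bisector_reflect th), E, !bisector_reflect_polar.
      replace (th - th / 2) with (th / 2) by field. apply detour_real_ge_conj.
Qed.

End BisectorPair.

Lemma arcsinh_pos v : 0 < v -> 0 < arcsinh v.
Proof. intros. rewrite <- arcsinh_0. apply arcsinh_lt, H. Qed.

Lemma one_le_mul_tanh c u : 0 < c -> 0 < u -> 1 + sinh u ^ 2 <= c ^ 2 * sinh u ^ 2 ->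
  1 <= c * tanh u.
Proof.
  intros Hc Hu H. pose proof (tanh_pos u Hu). pose proof (pow2_ge_0 (sinh u)).
  apply le_of_sqr_le; [lra | apply Rmult_le_pos; lra |].
  rewrite Rpow_mult_distr, tanh_sqr, pow1.
  apply Rmult_le_reg_r with (1 + sinh u ^ 2); [lra |].
  field_simplify; lra.
Qed.

Lemma lt_tanh c u : 0 <= c -> 0 < u -> c ^ 2 * (1 + sinh u ^ 2) < sinh u ^ 2 -> c < tanh u.
Proof.
  intros Hc Hu H. pose proof (tanh_pos u Hu). pose proof (pow2_ge_0 (sinh u)).
  apply lt_of_sqr_lt; [lra | lra |]. rewrite tanh_sqr.
  apply Rmult_lt_reg_r with (1 + sinh u ^ 2); [lra |].
  field_simplify; lra.
Qed.

Lemma exists_tanh_lt_mul_s_metric_small th c : 0 < th < PI -> 1 < c ->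
  exists x y, sector th x /\ sector th y /\ tanh (rho_S th x y / 2) < c * s_metric (sector th) x y.
Proof.
  intros Hth Hc. pose proof PI_RGT_0 as HPI.
  set (v := 1 / (c - 1)). assert (Hv : 0 < v) by (apply Rdiv_lt_0_compat; lra).
  set (Y := arcsinh v). pose proof (arcsinh_pos v Hv) as HY. fold Y in HY.
  destruct (bisector_pair_in_sector th Y ltac:(lra)) as [Hx Hy].
  do 2 eexists. split; [exact Hx |]. split; [exact Hy |].
  rewrite tanh_half_rho_S_bisector by lra.
  pose proof (tanh_lt_1 (PI / th * Y)). pose proof (tanh_le_s_metric_bisector th Y ltac:(lra) HY).
  enough (1 <= c * tanh Y) by nra.
  apply one_le_mul_tanh; [lra | exact HY |]. unfold Y. rewrite sinh_arcsinh. unfold v.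
  apply Rmult_le_reg_r with ((c - 1) ^ 2); [nra |]. field_simplify; nra.
Qed.

Lemma exists_mul_s_metric_lt_tanh_nonpos th c : 0 < th < 2 * PI -> c <= 0 ->
  exists x y, sector th x /\ sector th y /\ c * s_metric (sector th) x y < tanh (rho_S th x y / 2).
Proof.
  intros Hth Hc. destruct (bisector_pair_in_sector th 1 Hth) as [Hx Hy].
  do 2 eexists. split; [exact Hx |]. split; [exact Hy |].
  rewrite tanh_half_rho_S_bisector by lra.
  assert (0 < PI / th * 1) by (rewrite Rmult_1_r; apply Rdiv_lt_0_compat; [apply PI_RGT_0 | lra]).
  pose proof (tanh_pos _ H).
  pose proof (s_metric_nonneg th (polar (exp (2 * 1)) (th / 2)) (polar 1 (th / 2))
                (boundary_nonempty th Hth)). nra.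
Qed.

Lemma sqr_lt_sqr_of_half_gap w : 1 < w -> 1 + ((w - 1) / 2) ^ 2 < w ^ 2.
Proof. intros. nra. Qed.

Lemma bisector_ratio_bound c k s0 v A : 0 < A -> 0 < s0 -> k * k * A <= v ^ 2 ->
  c ^ 2 * (1 + v ^ 2) < (k * s0) ^ 2 -> c ^ 2 * (A / (A + s0 ^ 2)) * (1 + v ^ 2) < v ^ 2.
Proof.
  intros HA Hs0 HkA Hc.
  assert (c ^ 2 * (1 + v ^ 2) * A < (k * s0) ^ 2 * A) by (apply Rmult_lt_compat_r; lra).
  assert ((k * s0) ^ 2 * A <= s0 ^ 2 * v ^ 2)
    by (replace ((k * s0) ^ 2 * A) with (s0 ^ 2 * (k * k * A)) by ring;
        apply Rmult_le_compat_l; [apply pow2_ge_0 | exact HkA]).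
  assert (0 <= A * v ^ 2) by (apply Rmult_le_pos; [lra | apply pow2_ge_0]).
  apply Rmult_lt_reg_r with (A + s0 ^ 2); [nra |].
  field_simplify; [lra | nra].
Qed.

Lemma exists_mul_s_metric_lt_tanh_small th c : 0 < th < PI -> c < PI / th * sin (th / 2) ->
  exists x y, sector th x /\ sector th y /\ c * s_metric (sector th) x y < tanh (rho_S th x y / 2).
Proof.
  intros Hth Hc. pose proof PI_RGT_0 as HPI.
  destruct (Rle_or_lt c 0) as [Hc0 | Hc0]; [apply exists_mul_s_metric_lt_tanh_nonpos; lra |].
  set (k := PI / th) in *.
  assert (Hk : 1 < k) by (unfold k; apply Rmult_lt_reg_r with th; [lra |]; field_simplify; lra).
  set (s0 := sin (th / 2)) in *. assert (Hs0 : 0 < s0) by (apply sin_gt_0; lra).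
  set (w := k * s0 / c).
  assert (Hw : 1 < w) by (unfold w; apply Rmult_lt_reg_r with c; [lra |]; field_simplify; lra).
  set (v := (w - 1) / 2). assert (Hv : 0 < v) by (unfold v; lra).
  set (Y := arcsinh v / k). assert (HkY : k * Y = arcsinh v) by (unfold Y; field; lra).
  assert (HY : 0 < Y) by (unfold Y; apply Rdiv_lt_0_compat; [apply arcsinh_pos |]; lra).
  destruct (bisector_pair_in_sector th Y ltac:(lra)) as [Hx Hy].
  do 2 eexists. split; [exact Hx |]. split; [exact Hy |].
  rewrite tanh_half_rho_S_bisector by lra. fold k. rewrite HkY.
  pose proof (s_metric_bisector_le_small th Y ltac:(lra) HY ltac:(lra)) as Hs.
  destruct (dist_ratio_bisector_sqr th Y ltac:(lra) HY) as [Hq0 Hq]. fold s0 in Hq.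
  set (q := Cmod _ / Cmod _) in Hs, Hq0, Hq.
  apply Rle_lt_trans with (c * q); [apply Rmult_le_compat_l; lra |].
  apply lt_tanh; [apply Rmult_le_pos; lra | apply arcsinh_pos, Hv |].
  rewrite sinh_arcsinh, Rpow_mult_distr, Hq.
  pose proof (sinh_mul_sqr_ge k Y ltac:(lra)) as HA. rewrite HkY, sinh_arcsinh in HA.
  pose proof (sqr_lt_sqr_of_half_gap w Hw) as Hvw. fold v in Hvw.
  assert (Hcw : c * w = k * s0) by (unfold w; field; lra).
  apply (bisector_ratio_bound c k); [apply pow_lt, sinh_pos, HY | exact Hs0 | exact HA |].
  rewrite <- Hcw, Rpow_mult_distr. apply Rmult_lt_compat_l; [nra | lra].
Qed.

Lemma exists_tanh_lt_mul_s_metric_large th c : PI < th < 2 * PI -> PI / th < c ->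
  exists x y, sector th x /\ sector th y /\ tanh (rho_S th x y / 2) < c * s_metric (sector th) x y.
Proof.
  intros Hth Hc. pose proof PI_RGT_0 as HPI.
  set (k := PI / th) in *. assert (Hk : 0 < k < 1).
  { unfold k. split; [apply Rdiv_lt_0_compat; lra |]. apply Rmult_lt_reg_r with th; [lra |].
    field_simplify; lra. }
  set (w := c / k).
  assert (Hw : 1 < w) by (unfold w; apply Rmult_lt_reg_r with k; [lra |]; field_simplify; lra).
  set (v := (w - 1) / 2). assert (Hv : 0 < v) by (unfold v; lra).
  set (Y := arcsinh v). pose proof (arcsinh_pos v Hv) as HY. fold Y in HY.
  destruct (bisector_pair_in_sector th Y ltac:(lra)) as [Hx Hy].
  do 2 eexists. split; [exact Hx |]. split; [exact Hy |].
  rewrite tanh_half_rho_S_bisector by lra. fold k.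
  pose proof (tanh_le_s_metric_bisector th Y ltac:(lra) HY).
  apply Rlt_le_trans with (c * tanh Y); [| apply Rmult_le_compat_l; lra].
  assert (HkY : 0 < k * Y) by nra.
  pose proof (tanh_pos _ HkY). pose proof (tanh_pos _ HY).
  apply lt_of_sqr_lt; [lra | apply Rmult_le_pos; lra |].
  assert (HsY : sinh Y = v) by apply sinh_arcsinh.
  rewrite Rpow_mult_distr, !tanh_sqr, HsY.
  pose proof (sinh_mul_sqr_le k Y ltac:(lra)) as HB. rewrite HsY in HB.
  pose proof (pow2_ge_0 (sinh (k * Y))).
  pose proof (sqr_lt_sqr_of_half_gap w Hw) as Hvw. fold v in Hvw.
  assert (Hcw : c = k * w) by (unfold w; field; lra).
  assert (sinh (k * Y) ^ 2 / (1 + sinh (k * Y) ^ 2) <= k * k * v ^ 2).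
  { apply Rle_trans with (sinh (k * Y) ^ 2); [| lra].
    apply Rmult_le_reg_r with (1 + sinh (k * Y) ^ 2); [lra |]. field_simplify; nra. }
  apply Rle_lt_trans with (k * k * v ^ 2); [lra |].
  rewrite Hcw. apply Rmult_lt_reg_r with (1 + v ^ 2); [nra |].
  replace ((k * w) ^ 2 * (v ^ 2 / (1 + v ^ 2)) * (1 + v ^ 2)) with (k * k * v ^ 2 * w ^ 2)
    by (field; nra).
  apply Rmult_lt_compat_l; [apply Rmult_lt_0_compat; [nra | apply pow_lt; lra] | lra].
Qed.

Lemma exists_mul_s_metric_lt_tanh_large th c : PI < th < 2 * PI -> c < 1 ->
  exists x y, sector th x /\ sector th y /\ c * s_metric (sector th) x y < tanh (rho_S th x y / 2).
Proof.
  intros Hth Hc. pose proof PI_RGT_0 as HPI.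
  destruct (Rle_or_lt c 0) as [Hc0 | Hc0]; [apply exists_mul_s_metric_lt_tanh_nonpos; lra |].
  set (k := PI / th). assert (Hk : 0 < k) by (unfold k; apply Rdiv_lt_0_compat; lra).
  set (v := 1 / (1 - c)). assert (Hv : 1 < v).
  { unfold v. apply Rmult_lt_reg_r with (1 - c); [lra |]. field_simplify; lra. }
  set (Y := arcsinh v / k). assert (HkY : k * Y = arcsinh v) by (unfold Y; field; lra).
  assert (HY : 0 < Y) by (unfold Y; apply Rdiv_lt_0_compat; [apply arcsinh_pos |]; lra).
  destruct (bisector_pair_in_sector th Y ltac:(lra)) as [Hx Hy].
  do 2 eexists. split; [exact Hx |]. split; [exact Hy |].
  rewrite tanh_half_rho_S_bisector by lra. fold k. rewrite HkY.
  assert (Hxy : polar (exp (2 * Y)) (th / 2) <> polar 1 (th / 2)).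
  { intros E. pose proof (dist_bisector th Y ltac:(lra) HY) as D. rewrite E, Cmod_sub_diag in D.
    pose proof (sinh_pos Y HY). pose proof (exp_pos Y). nra. }
  pose proof (s_metric_le_1 th _ _ (boundary_nonempty th ltac:(lra)) Hxy).
  apply Rle_lt_trans with c; [nra |].
  apply lt_tanh; [lra | apply arcsinh_pos; lra |]. rewrite sinh_arcsinh.
  assert (Hv1 : v * (1 - c) = 1) by (unfold v; field; lra).
  nra.
Qed.

Theorem corollary4p7 (theta : R) (Htheta : 0 < theta < 2 * PI) :
  (forall x y : C, sector theta x -> sector theta y ->
     (theta < PI ->
        s_metric (sector theta) x y <= tanh (rho_S theta x y / 2) /\
        tanh (rho_S theta x y / 2) <= (PI / theta) * sin (theta / 2) * s_metric (sector theta) x y) /\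
     (theta = PI ->
        s_metric (sector theta) x y = tanh (rho_S theta x y / 2)) /\
     (PI < theta ->
        (PI / theta) * s_metric (sector theta) x y <= tanh (rho_S theta x y / 2) /\
        tanh (rho_S theta x y / 2) <= s_metric (sector theta) x y)) /\
  (* sharpness of the constants *)
  (theta < PI ->
     (forall c, 1 < c -> exists x y, sector theta x /\ sector theta y /\
        tanh (rho_S theta x y / 2) < c * s_metric (sector theta) x y) /\
     (forall c, c < (PI / theta) * sin (theta / 2) -> exists x y, sector theta x /\ sector theta y /\
        c * s_metric (sector theta) x y < tanh (rho_S theta x y / 2))) /\
  (PI < theta ->
     (forall c, PI / theta < c -> exists x y, sector theta x /\ sector theta y /\
        tanh (rho_S theta x y / 2) < c * s_metric (sector theta) x y) /\
     (forall c, c < 1 -> exists x y, sector theta x /\ sector theta y /\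
        c * s_metric (sector theta) x y < tanh (rho_S theta x y / 2))).
Proof.
  pose proof PI_RGT_0 as HPI.
  split; [| split].
  - intros x y Hx Hy. split; [| split].
    + intros Hlt. split; [apply s_metric_le_tanh_small | apply tanh_le_s_metric_small]; auto; lra.
    + intros ->. apply s_metric_eq_tanh_half_plane; assumption.
    + intros Hgt.
      split; [apply k_mul_s_metric_le_tanh_large | apply tanh_le_s_metric_large]; auto; lra.
  - intros Hlt. split; intros c Hc; [apply exists_tanh_lt_mul_s_metric_small | apply exists_mul_s_metric_lt_tanh_small]; lra.
  - intros Hgt. split; intros c Hc; [apply exists_tanh_lt_mul_s_metric_large | apply exists_mul_s_metric_lt_tanh_large]; lra.
Qed.
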